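(* Let $\varphi:\mathbb{N}\to\mathbb{C}$ satisfy $|\varphi(m)|\leq 1$ for all $m$. For all real $\alpha\geq 1$, $\beta\geq 0$, $K\geq 0$ and $H\geq 1$, \[ \left|\sum_{0<n\leq K}\varphi\bigl(\lfloor n\alpha+\beta\rfloor\bigr)-\frac 1\alpha\sum_{\beta<m\leq \beta+K\alpha}\varphi(m)\right| \leq \sum_{1\leq |h|\leq H}\min\left\{\frac 1\alpha,\frac 1{|h|}\right\}\left|\sum_{\beta<m\leq\beta+K\alpha}\varphi(m)\,e\!\left(-m\frac h\alpha\right)\right| +\frac 1H\sum_{0\leq|h|\leq H}\left|\sum_{\beta<m\leq\beta+K\alpha}e\!\left(-m\frac h\alpha\right)\right|+O(1), \] where the implied constant is absolute.
   Context: $e(x)=e^{2\pi i x}$; $\lfloor\cdot\rfloor$ is the floor function; $\mathbb{N}$ denotes the nonnegative integers; sums over $n,m,h$ range over integers in the indicated ranges. *)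

From Stdlib Require Import Reals ZArith List.
From Coquelicot Require Import Coquelicot.
Open Scope R_scope.

(* floor x : the greatest integer <= x (Stdlib's Int_part is exactly floor). *)
Definition floorZ (x : R) : Z := Int_part x.

Definition Zrange (a b : Z) : list Z :=
  map (fun i => (a + Z.of_nat i)%Z) (seq 0 (Z.to_nat (b - a + 1))).

Definition sumC (a b : Z) (f : Z -> C) : C :=
  fold_right (fun k acc => Cplus (f k) acc) (RtoC 0) (Zrange a b).

Definition sumR (a b : Z) (f : Z -> R) : R :=
  fold_right (fun k acc => f k + acc) 0 (Zrange a b).

Definition e (x : R) : C := (cos (2 * PI * x), sin (2 * PI * x)).

From Stdlib Require Import Reals ZArith List Lra Lia Classical.
From Coquelicot Require Import Coquelicot.
Open Scope R_scope.

(* A Beatty sequence hits m exactly floor ((beta - m) / alpha) - floor ((beta - m - 1) / alpha)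
   times, which is 1/alpha + psi (a - 1/alpha) - psi a with a = (beta - m) / alpha and psi the
   sawtooth x - floor x - 1/2.  Apart from one boundary term, the Beatty sum is therefore the
   mean (1/alpha) sum_m phi(m) plus sum_m phi(m) (psi (a - 1/alpha) - psi a).

   Vaaler's lemma replaces psi by a trigonometric polynomial V of degree M = floor H, with
   |psi - V| <= F / 2 for the Fejer kernel F normalised by 1/(M+1).  Expanding V and F in
   Fourier series and exchanging the sums yields the two exponential sums: the coefficient of
   e(h x) in V (x - 1/alpha) - V x is at most min (1/alpha, 1/|h|), and those of F / 2 are at
   most 1/(2(M+1)) <= 1/(2H).

   Vaaler's lemma itself comes from writing V - psi at y, via translates of F and of a
   conjugate kernel by the nodes k/(M+1), as sin^2 (pi (M+1) y) / (M+1)^2 times the gap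
   between a Riemann sum and the integral of the derivative of z cot (pi z) / pi; this
   derivative is monotone on each half of (-1, 1), which bounds the gap by 1/(2 sin^2 (pi y)). *)

Fixpoint rsum (n : nat) (f : nat -> R) : R :=
  match n with O => 0 | S n' => rsum n' f + f n' end.

Lemma rsum_S n f : rsum (S n) f = rsum n f + f n.
Proof. reflexivity. Qed.

Lemma rsum_ext n f g : (forall k, (k < n)%nat -> f k = g k) -> rsum n f = rsum n g.
Proof.
  induction n as [|n IH]; intros Hfg; simpl; auto.
  rewrite IH, Hfg; auto; intros; apply Hfg; lia.
Qed.

Lemma rsum_plus n f g : rsum n (fun k => f k + g k) = rsum n f + rsum n g.
Proof. induction n; simpl; [lra | rewrite IHn; lra]. Qed.

Lemma rsum_minus n f g : rsum n (fun k => f k - g k) = rsum n f - rsum n g.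
Proof. induction n; simpl; [lra | rewrite IHn; lra]. Qed.

Lemma rsum_scal n c f : rsum n (fun k => c * f k) = c * rsum n f.
Proof. induction n; simpl; [lra | rewrite IHn; lra]. Qed.

Lemma rsum_zero n : rsum n (fun _ => 0) = 0.
Proof. induction n; simpl; [lra | rewrite IHn; lra]. Qed.

Lemma rsum_const n c : rsum n (fun _ => c) = INR n * c.
Proof. induction n; simpl rsum; [simpl; lra | rewrite IHn, S_INR; lra]. Qed.

Lemma rsum_id n : rsum n INR = INR n * (INR n - 1) / 2.
Proof. induction n; simpl rsum; [simpl; lra | rewrite IHn, S_INR; lra]. Qed.

Lemma rsum_le n f g : (forall k, (k < n)%nat -> f k <= g k) -> rsum n f <= rsum n g.
Proof.
  induction n as [|n IH]; intros Hfg; simpl; [lra|].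
  assert (f n <= g n) by (apply Hfg; lia).
  assert (rsum n f <= rsum n g) by (apply IH; intros; apply Hfg; lia).
  lra.
Qed.

Lemma rsum_shift n f : rsum (S n) f = f O + rsum n (fun k => f (S k)).
Proof. induction n; simpl in *; [lra | rewrite IHn; lra]. Qed.

Lemma rsum_telescope n g : rsum n (fun k => g k - g (S k)) = g O - g n.
Proof. induction n; simpl; [lra | rewrite IHn; lra]. Qed.

Lemma rsum_single n j f :
  (j < n)%nat -> (forall k, (k < n)%nat -> k <> j -> f k = 0) -> rsum n f = f j.
Proof.
  induction n as [|n IH]; intros Hj Hf; [lia | simpl].
  destruct (Nat.eq_dec j n) as [->|Hjn].
  - rewrite (rsum_ext n f (fun _ => 0)), rsum_zero; [lra|].
    intros; apply Hf; lia.
  - rewrite IH, (Hf n); [lra | lia | auto | lia | intros; apply Hf; lia].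
Qed.

Lemma rsum_swap n m (f : nat -> nat -> R) :
  rsum n (fun i => rsum m (fun j => f i j)) = rsum m (fun j => rsum n (fun i => f i j)).
Proof. induction n; simpl; [rewrite rsum_zero | rewrite IHn, <- rsum_plus]; auto. Qed.

Lemma cos_sin_succ_mul (n : nat) (t : R) :
  cos (INR (S n) * t) = cos (INR n * t) * cos t - sin (INR n * t) * sin t /\
  sin (INR (S n) * t) = sin (INR n * t) * cos t + cos (INR n * t) * sin t.
Proof.
  rewrite S_INR. replace ((INR n + 1) * t) with (INR n * t + t) by ring.
  rewrite cos_plus, sin_plus. split; ring.
Qed.

Lemma cos_sin_pred_mul (n : nat) (t : R) :
  cos (INR n * t) = cos (INR (S n) * t) * cos t + sin (INR (S n) * t) * sin t /\
  sin (INR n * t) = sin (INR (S n) * t) * cos t - cos (INR (S n) * t) * sin t.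
Proof.
  rewrite S_INR. replace (INR n * t) with ((INR n + 1) * t - t) by ring.
  rewrite cos_minus, sin_minus. split; ring_simplify; auto.
Qed.

Ltac trig_sum_step n t IH :=
  rewrite (rsum_S (S n)), Rmult_plus_distr_l, IH;
  destruct (cos_sin_succ_mul (S n) t) as [Ec Es];
  destruct (cos_sin_pred_mul n t) as [Ec' Es'];
  rewrite ?Ec, ?Es, ?Ec', ?Es', ?S_INR; ring.

Ltac trig_sum_base t :=
  cbn [rsum INR]; replace (1 * t) with t by ring; replace (0 * t) with 0 by ring;
  rewrite ?cos_0, ?sin_0; simpl; ring.

Lemma rsum_cos_arith n t :
  2 * (1 - cos t) * rsum (S n) (fun k => cos (INR k * t))
  = 1 - cos t + cos (INR n * t) - cos (INR (S n) * t).
Proof. induction n; [trig_sum_base t | trig_sum_step n t IHn]. Qed.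

Lemma rsum_sin_arith n t :
  2 * (1 - cos t) * rsum (S n) (fun k => sin (INR k * t))
  = sin t + sin (INR n * t) - sin (INR (S n) * t).
Proof. induction n; [trig_sum_base t | trig_sum_step n t IHn]. Qed.

Lemma rsum_kcos_arith n t :
  2 * (1 - cos t) * rsum (S n) (fun k => INR k * cos (INR k * t))
  = (INR n + 1) * cos (INR n * t) - INR n * cos (INR (S n) * t) - 1.
Proof. induction n; [trig_sum_base t | trig_sum_step n t IHn]. Qed.

Lemma rsum_ksin_arith n t :
  2 * (1 - cos t) * rsum (S n) (fun k => INR k * sin (INR k * t))
  = (INR n + 1) * sin (INR n * t) - INR n * sin (INR (S n) * t).
Proof. induction n; [trig_sum_base t | trig_sum_step n t IHn]. Qed.

Section RootsOfUnity.
Variables M h : nat.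
Hypothesis h_ge1 : (1 <= h)%nat.
Hypothesis h_leM : (h <= M)%nat.
Let L := INR (S M).
Let u := PI * INR h / L.

Lemma root_angle_range : 0 < u < PI.
Proof.
  assert (0 < INR h) by (apply lt_0_INR; lia).
  assert (INR h < L) by (apply lt_INR; lia).
  pose proof PI_RGT_0.
  unfold u; split; [apply Rdiv_lt_0_compat; nra|].
  apply Rmult_lt_reg_r with L; [lra|].
  unfold Rdiv; rewrite Rmult_assoc, Rinv_l; nra.
Qed.

Lemma sin_root_angle_pos : 0 < sin u.
Proof. destruct root_angle_range; apply sin_gt_0; auto. Qed.

Let angle_M : INR M * (2 * u) = - (2 * u) + 2 * INR h * PI.
Proof. unfold u, L; rewrite S_INR; field; pose proof (pos_INR M); lra. Qed.

Let angle_L : INR (S M) * (2 * u) = 0 + 2 * INR h * PI.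
Proof. unfold u, L; field; pose proof (pos_INR M); rewrite S_INR; lra. Qed.

Ltac close_root_sum E :=
  rewrite angle_M, angle_L, ?cos_period, ?sin_period, ?cos_neg, ?sin_neg, ?cos_0, ?sin_0 in E;
  rewrite ?cos_2a_sin, ?sin_2a in E;
  apply (Rmult_eq_reg_l (4 * (sin u * sin u))); [|pose proof sin_root_angle_pos; nra].

Lemma rsum_cos_roots : rsum (S M) (fun k => cos (INR k * (2 * u))) = 0.
Proof.
  pose proof (rsum_cos_arith M (2 * u)) as E. close_root_sum E.
  set (X := rsum _ _) in *; nra.
Qed.

Lemma rsum_sin_roots : rsum (S M) (fun k => sin (INR k * (2 * u))) = 0.
Proof.
  pose proof (rsum_sin_arith M (2 * u)) as E. close_root_sum E.
  set (X := rsum _ _) in *; nra.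
Qed.

Lemma rsum_kcos_roots : rsum (S M) (fun k => INR k * cos (INR k * (2 * u))) = - L / 2.
Proof.
  pose proof (rsum_kcos_arith M (2 * u)) as E. close_root_sum E.
  replace (INR M) with (L - 1) in E by (unfold L; rewrite S_INR; ring).
  set (X := rsum _ _) in *; nra.
Qed.

Lemma rsum_ksin_roots :
  rsum (S M) (fun k => INR k * sin (INR k * (2 * u))) = - (L / 2) * (cos u / sin u).
Proof.
  pose proof (rsum_ksin_arith M (2 * u)) as E. close_root_sum E.
  replace (INR M + 1) with L in E by (unfold L; rewrite S_INR; auto).
  pose proof sin_root_angle_pos.
  field_simplify; [|lra]. field_simplify in E. nra.
Qed.

End RootsOfUnity.

(** * Vaaler's kernels *)

Definition kernel_len (M : nat) : R := INR (S M).

(* With L = M + 1: [fejer] is the Fejer kernel sin^2 (pi L z) / (L sin (pi z))^2,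
   [vaaler_poly] is Vaaler's trigonometric polynomial of degree M approximating
   the sawtooth x - floor x - 1/2, and [vaaler_major] bounds the error
   (J. D. Vaaler, Bull. AMS 12 (1985)). *)
Definition fejer (M : nat) (z : R) : R :=
  / kernel_len M * (1 + 2 * rsum M (fun i =>
     (1 - INR (S i) / kernel_len M) * cos (2 * PI * INR (S i) * z))).

Definition fejer_sine (M : nat) (z : R) : R :=
  / (PI * kernel_len M ^ 2) *
  (rsum M (fun i => sin (2 * PI * INR (S i) * z)) + / 2 * sin (2 * PI * kernel_len M * z)).

Definition vaaler_coef (M : nat) (r : R) : R :=
  / kernel_len M * ((1 - r / kernel_len M) *
    (cos (PI * r / kernel_len M) / sin (PI * r / kernel_len M)) + / PI).

Definition vaaler_poly (M : nat) (x : R) : R :=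
  - rsum M (fun i => vaaler_coef M (INR (S i)) * sin (2 * PI * INR (S i) * x)).

Definition vaaler_major (M : nat) (x : R) : R := fejer M x / 2.

Section KernelIdentities.
Variable M : nat.
Let L := kernel_len M.

Lemma kernel_len_pos : 0 < L.
Proof. apply lt_0_INR; lia. Qed.

Let node_angle (h k : nat) y :
  2 * PI * INR h * (y - INR k / L) = 2 * PI * INR h * y - INR k * (2 * (PI * INR h / INR (S M))).
Proof. unfold L, kernel_len; field; apply Rgt_not_eq, lt_0_INR; lia. Qed.

Lemma rsum_nodes_cos i y : (i < M)%nat ->
  rsum (S M) (fun k => cos (2 * PI * INR (S i) * (y - INR k / L))) = 0.
Proof.
  intros Hi. set (a := 2 * PI * INR (S i) * y). set (t := 2 * (PI * INR (S i) / INR (S M))).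
  rewrite (rsum_ext _ _ (fun k => cos a * cos (INR k * t) + sin a * sin (INR k * t))).
  - rewrite rsum_plus, !rsum_scal; unfold t.
    rewrite rsum_cos_roots, rsum_sin_roots by lia. ring.
  - intros k _. rewrite node_angle; fold a t. rewrite cos_minus; ring.
Qed.

Lemma rsum_nodes_sin i y : (i < M)%nat ->
  rsum (S M) (fun k => sin (2 * PI * INR (S i) * (y - INR k / L))) = 0.
Proof.
  intros Hi. set (a := 2 * PI * INR (S i) * y). set (t := 2 * (PI * INR (S i) / INR (S M))).
  rewrite (rsum_ext _ _ (fun k => sin a * cos (INR k * t) + (- cos a) * sin (INR k * t))).
  - rewrite rsum_plus, !rsum_scal; unfold t.
    rewrite rsum_cos_roots, rsum_sin_roots by lia. ring.
  - intros k _. rewrite node_angle; fold a t. rewrite sin_minus; ring.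
Qed.

Lemma rsum_nodes_weighted_cos i y : (i < M)%nat ->
  rsum (S M) (fun k => (INR k / L - / 2) * cos (2 * PI * INR (S i) * (y - INR k / L)))
  = - / 2 * cos (2 * PI * INR (S i) * y)
    - / 2 * (cos (PI * INR (S i) / L) / sin (PI * INR (S i) / L)) * sin (2 * PI * INR (S i) * y).
Proof.
  intros Hi. set (a := 2 * PI * INR (S i) * y). set (t := 2 * (PI * INR (S i) / INR (S M))).
  rewrite (rsum_ext _ _ (fun k =>
      / L * (cos a * (INR k * cos (INR k * t))) + / L * (sin a * (INR k * sin (INR k * t)))
    + (- / 2 * cos a) * cos (INR k * t) + (- / 2 * sin a) * sin (INR k * t))).
  - rewrite !rsum_plus, !rsum_scal; unfold t.
    rewrite rsum_kcos_roots, rsum_ksin_roots, rsum_cos_roots, rsum_sin_roots by lia.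
    fold (kernel_len M) L. pose proof kernel_len_pos.
    field. split; [|lra]. apply Rgt_not_eq, (sin_root_angle_pos M (S i)); lia.
  - intros k _. rewrite node_angle; fold a t. rewrite cos_minus.
    field. pose proof kernel_len_pos; lra.
Qed.

Lemma rsum_nodes_sin_top y :
  rsum (S M) (fun k => sin (2 * PI * L * (y - INR k / L))) = L * sin (2 * PI * L * y).
Proof.
  rewrite (rsum_ext _ _ (fun _ => sin (2 * PI * L * y))), rsum_const; [reflexivity|].
  intros k _. rewrite <- (sin_period _ k). f_equal.
  field. pose proof kernel_len_pos; lra.
Qed.

Lemma rsum_nodes_centered : rsum (S M) (fun k => INR k / L - / 2) = - / 2.
Proof.
  rewrite rsum_minus, (rsum_ext _ _ (fun k => / L * INR k)) by (intros; unfold Rdiv; ring).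
  rewrite rsum_scal, rsum_id, rsum_const. unfold L, kernel_len. rewrite S_INR.
  field. pose proof (pos_INR M); lra.
Qed.

Lemma fejer_partition y : rsum (S M) (fun k => fejer M (y - INR k / L)) = 1.
Proof.
  unfold fejer. fold L. rewrite rsum_scal, rsum_plus, rsum_const, rsum_scal, rsum_swap.
  rewrite (rsum_ext M _ (fun _ => 0)), rsum_zero.
  - unfold L, kernel_len. field. apply Rgt_not_eq, lt_0_INR; lia.
  - intros i Hi. rewrite rsum_scal, rsum_nodes_cos; auto; ring.
Qed.

Let rsum_scal_in n (f g : nat -> R) c :
  rsum n (fun i => f i * (c * g i)) = c * rsum n (fun i => f i * g i).
Proof. rewrite <- rsum_scal. apply rsum_ext; intros; ring. Qed.

Lemma vaaler_poly_nodes y : vaaler_poly M y =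
    rsum (S M) (fun k => (INR k / L - / 2) * fejer M (y - INR k / L)) + / 2 * fejer M y
  + rsum (S M) (fun k => fejer_sine M (y - INR k / L)) - L * fejer_sine M y.
Proof.
  pose proof kernel_len_pos as HL.
  set (w := fun i : nat => 1 - INR (S i) / L).
  set (cs := fun i : nat => cos (2 * PI * INR (S i) * y)).
  set (sn := fun i : nat => sin (2 * PI * INR (S i) * y)).
  set (ct := fun i : nat => cos (PI * INR (S i) / L) / sin (PI * INR (S i) / L)).
  assert (Fsum : rsum (S M) (fun k => (INR k / L - / 2) * fejer M (y - INR k / L)) =
    / L * (- / 2) + 2 / L * rsum M (fun i => w i * (- / 2 * cs i - / 2 * ct i * sn i))).
  { unfold fejer. fold L.
    rewrite (rsum_ext _ _ (fun k => / L * (INR k / L - / 2) + 2 / L * rsum M (fun i =>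
       w i * ((INR k / L - / 2) * cos (2 * PI * INR (S i) * (y - INR k / L)))))).
    2:{ intros k _. rewrite rsum_scal_in. unfold w, Rdiv; ring. }
    rewrite rsum_plus, !rsum_scal, rsum_nodes_centered, rsum_swap.
    do 2 f_equal. apply rsum_ext. intros i Hi.
    rewrite rsum_scal, rsum_nodes_weighted_cos; auto. }
  assert (Gsum : rsum (S M) (fun k => fejer_sine M (y - INR k / L)) =
    / (PI * L ^ 2) * (/ 2 * (L * sin (2 * PI * L * y)))).
  { unfold fejer_sine. fold L.
    rewrite rsum_scal, rsum_plus, rsum_swap, rsum_scal, rsum_nodes_sin_top.
    rewrite (rsum_ext M _ (fun _ => 0)), rsum_zero; [ring|].
    intros i Hi; apply rsum_nodes_sin; auto. }
  rewrite Fsum, Gsum. unfold vaaler_poly, fejer_sine, fejer. fold L.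
  change (rsum M (fun i => (1 - INR (S i) / L) * cos (2 * PI * INR (S i) * y)))
    with (rsum M (fun i => w i * cs i)).
  change (rsum M (fun i => sin (2 * PI * INR (S i) * y))) with (rsum M sn).
  rewrite (rsum_ext M (fun i => vaaler_coef M (INR (S i)) * sin (2 * PI * INR (S i) * y))
             (fun i => / L * (w i * ct i * sn i) + / L / PI * sn i)).
  2:{ intros i Hi. unfold vaaler_coef, w, ct, sn. fold L. field.
      repeat split; try apply PI_neq0; try lra.
      apply Rgt_not_eq, (sin_root_angle_pos M (S i)); lia. }
  rewrite (rsum_ext M (fun i => w i * (- / 2 * cs i - / 2 * ct i * sn i))
             (fun i => - / 2 * (w i * cs i) + - / 2 * (w i * ct i * sn i))) by (intros; ring).
  rewrite !rsum_plus, !rsum_scal.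
  field. repeat split; try apply PI_neq0; lra.
Qed.

End KernelIdentities.

Lemma dirichlet_kernel n a :
  sin a * (1 + 2 * rsum n (fun i => cos (2 * INR (S i) * a))) = sin ((2 * INR n + 1) * a).
Proof.
  induction n as [|n IH].
  - simpl. replace ((2 * 0 + 1) * a) with a by ring. ring.
  - rewrite rsum_S. set (D := rsum n _) in *.
    replace (sin a * (1 + 2 * (D + cos (2 * INR (S n) * a))))
      with (sin a * (1 + 2 * D) + 2 * sin a * cos (2 * INR (S n) * a)) by ring.
    rewrite IH, !S_INR. set (x := (2 * INR n + 2) * a).
    replace ((2 * INR n + 1) * a) with (x - a) by (unfold x; ring).
    replace ((2 * (INR n + 1) + 1) * a) with (x + a) by (unfold x; ring).
    replace (2 * (INR n + 1) * a) with x by (unfold x; ring).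
    rewrite sin_plus, sin_minus. ring.
Qed.

(* Fejer's identity: the Fejer sum is the average of the Dirichlet kernels. *)
Lemma fejer_identity n a :
  sin a ^ 2 * (INR n + 2 * rsum n (fun i => (INR n - INR (S i)) * cos (2 * INR (S i) * a)))
  = sin (INR n * a) ^ 2.
Proof.
  induction n as [|n IH].
  - simpl. rewrite Rmult_0_l, sin_0. ring.
  - rewrite rsum_S, (rsum_ext n _ (fun i => (INR n - INR (S i)) * cos (2 * INR (S i) * a)
                                          + cos (2 * INR (S i) * a)))
      by (intros; rewrite S_INR; ring).
    rewrite rsum_plus.
    replace (sin a ^ 2 * (INR (S n) + 2 * (rsum n (fun i => (INR n - INR (S i)) * cos (2 * INR (S i) * a))
       + rsum n (fun i => cos (2 * INR (S i) * a)) + (INR (S n) - INR (S n)) * cos (2 * INR (S n) * a))))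
      with (sin a ^ 2 * (INR n + 2 * rsum n (fun i => (INR n - INR (S i)) * cos (2 * INR (S i) * a)))
            + sin a * (sin a * (1 + 2 * rsum n (fun i => cos (2 * INR (S i) * a)))))
      by (rewrite S_INR; ring).
    rewrite IH, dirichlet_kernel, S_INR. set (x := INR n * a).
    replace ((2 * INR n + 1) * a) with (2 * x + a) by (unfold x; ring).
    replace ((INR n + 1) * a) with (x + a) by (unfold x; ring).
    rewrite sin_plus, sin_plus, sin_2a, cos_2a.
    pose proof (sin2_cos2 a) as Pa. unfold Rsqr in Pa.
    replace (sin x ^ 2) with (sin x ^ 2 * (sin a * sin a + cos a * cos a)) at 1 by (rewrite Pa; ring).
    ring.
Qed.

Lemma conjugate_fejer_identity n a :
  sin a * (rsum n (fun i => sin (2 * INR (S i) * a)) + / 2 * sin (2 * INR (S n) * a))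
  = cos a * sin (INR (S n) * a) ^ 2.
Proof.
  induction n as [|n IH].
  - simpl. replace (2 * 1 * a) with (2 * a) by ring. replace (1 * a) with a by ring.
    rewrite sin_2a. field.
  - rewrite rsum_S. set (D := rsum n _) in *.
    replace (sin a * (D + sin (2 * INR (S n) * a) + / 2 * sin (2 * INR (S (S n)) * a)))
      with (sin a * (D + / 2 * sin (2 * INR (S n) * a))
            + sin a * (/ 2 * sin (2 * INR (S n) * a) + / 2 * sin (2 * INR (S (S n)) * a))) by field.
    rewrite IH. set (A := INR (S n) * a). set (B := INR (S (S n)) * a).
    replace (2 * INR (S n) * a) with (A + A) by (unfold A; ring).
    replace (2 * INR (S (S n)) * a) with (B + B) by (unfold B; ring).
    assert (Ea : a = B - A) by (unfold A, B; rewrite !S_INR; ring).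
    rewrite (f_equal sin Ea), (f_equal cos Ea). clearbody A B. clear IH.
    pose proof (sin2_cos2 A) as PA. pose proof (sin2_cos2 B) as PB. unfold Rsqr in *.
    rewrite !sin_plus, !sin_minus, !cos_minus.
    replace (sin B ^ 2) with (sin B ^ 2 * (sin A * sin A + cos A * cos A)) by (rewrite PA; ring).
    replace (sin A ^ 2) with (sin A ^ 2 * (sin B * sin B + cos B * cos B)) by (rewrite PB; ring).
    replace (/ 2 * (sin A * cos A + cos A * sin A) + / 2 * (sin B * cos B + cos B * sin B))
      with (sin A * cos A * (sin B * sin B + cos B * cos B)
            + sin B * cos B * (sin A * sin A + cos A * cos A)) by (rewrite PA, PB; field).
    ring.
Qed.

Section ClosedForms.
Variable M : nat.
Let L := kernel_len M.

Lemma fejer_closed z : sin (PI * z) <> 0 ->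
  fejer M z = sin (PI * L * z) ^ 2 / (L ^ 2 * sin (PI * z) ^ 2).
Proof.
  intros Hs. pose proof (kernel_len_pos M) as HL. fold L in HL.
  pose proof (fejer_identity (S M) (PI * z)) as E.
  rewrite rsum_S, Rminus_diag, Rmult_0_l, Rplus_0_r in E.
  change (INR (S M)) with L in E.
  rewrite (rsum_ext M _ (fun i => L * ((1 - INR (S i) / L) * cos (2 * PI * INR (S i) * z)))) in E.
  - rewrite rsum_scal in E. replace (L * (PI * z)) with (PI * L * z) in E by ring.
    rewrite <- E. unfold fejer. fold L. field. split; [auto | lra].
  - intros i _. replace (2 * INR (S i) * (PI * z)) with (2 * PI * INR (S i) * z) by ring.
    field. lra.
Qed.

Lemma fejer_sine_closed z : sin (PI * z) <> 0 ->
  fejer_sine M z = cos (PI * z) * sin (PI * L * z) ^ 2 / (PI * L ^ 2 * sin (PI * z)).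
Proof.
  intros Hs. pose proof (kernel_len_pos M) as HL. fold L in HL.
  pose proof (conjugate_fejer_identity M (PI * z)) as E.
  rewrite (rsum_ext M _ (fun i => sin (2 * PI * INR (S i) * z))) in E by (intros; f_equal; ring).
  replace (2 * INR (S M) * (PI * z)) with (2 * PI * L * z) in E by (unfold L, kernel_len; ring).
  replace (INR (S M) * (PI * z)) with (PI * L * z) in E by (unfold L, kernel_len; ring).
  rewrite <- E. unfold fejer_sine. fold L. field. repeat split; try lra; auto. apply PI_neq0.
Qed.

Lemma fejer_0 : fejer M 0 = 1.
Proof.
  unfold fejer. fold L.
  rewrite (rsum_ext M _ (fun i => 1 - / L * (INR i + 1))).
  - rewrite rsum_minus, rsum_const, rsum_scal, rsum_plus, rsum_id, rsum_const.
    unfold L, kernel_len. rewrite S_INR. field. pose proof (pos_INR M); lra.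
  - intros i _. rewrite Rmult_0_r, cos_0, S_INR. unfold Rdiv. ring.
Qed.

Lemma fejer_sine_0 : fejer_sine M 0 = 0.
Proof.
  unfold fejer_sine. rewrite (rsum_ext M _ (fun _ => 0)), rsum_zero, Rmult_0_r, sin_0; [ring|].
  intros; rewrite Rmult_0_r; apply sin_0.
Qed.

Lemma vaaler_poly_0 : vaaler_poly M 0 = 0.
Proof.
  unfold vaaler_poly. rewrite (rsum_ext M _ (fun _ => 0)), rsum_zero; [ring|].
  intros; rewrite Rmult_0_r, sin_0; ring.
Qed.

End ClosedForms.

(** * The function z cot(pi z) / pi *)

Definition zcot (z : R) : R := z * cos (PI * z) / (PI * sin (PI * z)).

Definition zcot_deriv (z : R) : R := cos (PI * z) / (PI * sin (PI * z)) - z / sin (PI * z) ^ 2.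

Lemma continuity_pt_of_is_derive (f : R -> R) (df x : R) : is_derive f x df -> continuity_pt f x.
Proof. intros Hd%is_derive_Reals. apply derivable_continuous_pt. exists df; auto. Qed.

Lemma x_cos_le_sin u : 0 <= u <= PI -> u * cos u <= sin u.
Proof.
  intros [H0 HPI].
  destruct (MVT_gen (fun t => sin t - t * cos t) 0 u (fun t => t * sin t)) as [c [Hc E]].
  - intros; auto_derive; auto; ring.
  - intros x _. apply (continuity_pt_of_is_derive _ (x * sin x)). auto_derive; auto; ring.
  - rewrite Rmin_left in Hc by lra. rewrite Rmax_right in Hc by lra.
    rewrite sin_0, Rmult_0_l in E.
    assert (0 <= sin c) by (apply sin_ge_0; lra).
    assert (0 <= c * sin c * (u - 0)) by (apply Rmult_le_pos; [apply Rmult_le_pos|]; lra).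
    lra.
Qed.

Lemma x_cos_sub_sin_mul_sin_le0 u : - PI < u < PI -> (u * cos u - sin u) * sin u <= 0.
Proof.
  intros Hu. destruct (Rle_lt_dec 0 u).
  - assert (u * cos u <= sin u) by (apply x_cos_le_sin; lra).
    assert (0 <= sin u) by (apply sin_ge_0; lra).
    nra.
  - assert ((- u) * cos (- u) <= sin (- u)) by (apply x_cos_le_sin; lra).
    assert (0 <= sin (- u)) by (apply sin_ge_0; lra).
    rewrite cos_neg, sin_neg in *. nra.
Qed.

Lemma abs_sin_le x : Rabs (sin x) <= Rabs x.
Proof.
  assert (Hpos : forall t, 0 < t -> - t < sin t < t).
  { intros t Ht. split; [|apply sin_lt_x; auto].
    pose proof (SIN_bound t). destruct (Rle_lt_dec t 1); [|lra].
    assert (0 < sin t) by (apply sin_gt_0; pose proof PI2_3_2; lra). lra. }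
  destruct (Rtotal_order x 0) as [Hx|[->|Hx]].
  - specialize (Hpos (- x)). rewrite sin_neg in Hpos.
    apply Rabs_le. rewrite Rabs_left by lra. lra.
  - rewrite sin_0; lra.
  - specialize (Hpos x Hx). apply Rabs_le. rewrite Rabs_pos_eq; lra.
Qed.

Lemma sin_PI_mul_neq0 z : -1 < z < 1 -> z <> 0 -> sin (PI * z) <> 0.
Proof.
  intros Hz Hz0 E. apply sin_eq_0_0 in E. destruct E as [k Hk].
  pose proof PI_RGT_0.
  assert (z = IZR k) by (apply (Rmult_eq_reg_r PI); nra). subst.
  assert (-1 < k < 1)%Z by (split; apply lt_IZR; lra).
  assert (k = 0%Z) by lia. subst; auto.
Qed.

Lemma sin_PI_mul_sqr_pos z : -1 < z < 1 -> z <> 0 -> 0 < sin (PI * z) ^ 2.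
Proof.
  intros Hz Hz0. pose proof (sin_PI_mul_neq0 z Hz Hz0).
  apply pow2_gt_0; auto.
Qed.

Lemma zcot_deriv_derive z : sin (PI * z) <> 0 ->
  is_derive zcot_deriv z (2 * (PI * z * cos (PI * z) - sin (PI * z)) / sin (PI * z) ^ 3).
Proof.
  intros Hs. pose proof PI_neq0. pose proof (sin2_cos2 (PI * z)) as P. unfold Rsqr in P.
  replace (2 * (PI * z * cos (PI * z) - sin (PI * z)) / sin (PI * z) ^ 3) with
    (2 * (PI * z * cos (PI * z) - sin (PI * z)) / sin (PI * z) ^ 3
     + (1 - (sin (PI * z) ^ 2 + cos (PI * z) ^ 2)) / sin (PI * z) ^ 2)
    by (replace (sin (PI * z) ^ 2 + cos (PI * z) ^ 2) with 1 by (rewrite <- P; ring); field; auto).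
  unfold zcot_deriv. auto_derive.
  - repeat split; auto; apply Rmult_integral_contrapositive; split; auto; lra.
  - field. auto.
Qed.

Lemma zcot_derive z : sin (PI * z) <> 0 -> is_derive zcot z (zcot_deriv z).
Proof.
  intros Hs. pose proof PI_neq0. pose proof (sin2_cos2 (PI * z)) as P. unfold Rsqr in P.
  replace (zcot_deriv z) with
    (zcot_deriv z + z * (1 - (sin (PI * z) ^ 2 + cos (PI * z) ^ 2)) / sin (PI * z) ^ 2)
    by (replace (sin (PI * z) ^ 2 + cos (PI * z) ^ 2) with 1 by (rewrite <- P; ring); field; auto).
  unfold zcot, zcot_deriv. auto_derive.
  - repeat split; auto; apply Rmult_integral_contrapositive; split; auto.
  - field. auto.
Qed.

Lemma zcot_second_deriv_nonpos z : -1 < z < 1 -> z <> 0 ->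
  2 * (PI * z * cos (PI * z) - sin (PI * z)) / sin (PI * z) ^ 3 <= 0.
Proof.
  intros Hz Hz0. pose proof (sin_PI_mul_neq0 z Hz Hz0) as Hs.
  pose proof (sin_PI_mul_sqr_pos z Hz Hz0) as Hs2. pose proof PI_RGT_0.
  assert (N : (PI * z * cos (PI * z) - sin (PI * z)) * sin (PI * z) <= 0)
    by (apply x_cos_sub_sin_mul_sin_le0; nra).
  replace (2 * (PI * z * cos (PI * z) - sin (PI * z)) / sin (PI * z) ^ 3) with
    (- (2 * (- ((PI * z * cos (PI * z) - sin (PI * z)) * sin (PI * z))) / (sin (PI * z) ^ 2) ^ 2))
    by (field; auto).
  assert (0 <= 2 * (- ((PI * z * cos (PI * z) - sin (PI * z)) * sin (PI * z))) / (sin (PI * z) ^ 2) ^ 2)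
    by (apply Rdiv_le_0_compat; nra).
  lra.
Qed.

Definition same_half_cell (a b : R) : Prop := (0 < a /\ b < 1) \/ (-1 < a /\ b < 0).

Lemma same_half_cell_inner a b x : same_half_cell a b -> a <= x <= b -> -1 < x < 1 /\ x <> 0.
Proof. intros [H|H] Hx; split; lra. Qed.

Lemma zcot_deriv_decreasing a b : a <= b -> same_half_cell a b -> zcot_deriv b <= zcot_deriv a.
Proof.
  intros Hab Hc.
  destruct (MVT_gen zcot_deriv a b
    (fun z => 2 * (PI * z * cos (PI * z) - sin (PI * z)) / sin (PI * z) ^ 3)) as [c [Hcab E]].
  - intros x Hx. rewrite Rmin_left, Rmax_right in Hx by lra.
    destruct (same_half_cell_inner a b x Hc) as [H1 H2]; [lra|].
    apply zcot_deriv_derive, sin_PI_mul_neq0; auto.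
  - intros x Hx. rewrite Rmin_left, Rmax_right in Hx by lra.
    destruct (same_half_cell_inner a b x Hc) as [H1 H2]; [lra|].
    eapply continuity_pt_of_is_derive, zcot_deriv_derive, sin_PI_mul_neq0; auto.
  - rewrite Rmin_left, Rmax_right in Hcab by lra.
    destruct (same_half_cell_inner a b c Hc) as [H1 H2]; [lra|].
    pose proof (zcot_second_deriv_nonpos c H1 H2). nra.
Qed.

Lemma zcot_mvt a b : a <= b -> same_half_cell a b ->
  exists c, a <= c <= b /\ zcot b - zcot a = zcot_deriv c * (b - a).
Proof.
  intros Hab Hc.
  destruct (MVT_gen zcot a b zcot_deriv) as [c [Hcab E]].
  - intros x Hx. rewrite Rmin_left, Rmax_right in Hx by lra.
    destruct (same_half_cell_inner a b x Hc) as [H1 H2]; [lra|].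
    apply zcot_derive, sin_PI_mul_neq0; auto.
  - intros x Hx. rewrite Rmin_left, Rmax_right in Hx by lra.
    destruct (same_half_cell_inner a b x Hc) as [H1 H2]; [lra|].
    eapply continuity_pt_of_is_derive, zcot_derive, sin_PI_mul_neq0; auto.
  - rewrite Rmin_left, Rmax_right in Hcab by lra. exists c; auto.
Qed.

Lemma zcot_deriv_nonpos b : 0 < b < 1 -> zcot_deriv b <= 0.
Proof.
  intros Hb. pose proof (sin_PI_mul_sqr_pos b ltac:(lra) ltac:(lra)). pose proof PI_RGT_0.
  assert (Hs : sin (PI * b) <> 0) by (apply sin_PI_mul_neq0; lra).
  assert (sin (2 * (PI * b)) <= 2 * (PI * b)).
  { destruct (Rtotal_order (PI * b) 0) as [|[E|]]; [nra| rewrite E, Rmult_0_r, sin_0; lra |].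
    left; apply sin_lt_x; lra. }
  rewrite sin_2a in *.
  replace (zcot_deriv b) with
    (- ((PI * b - sin (PI * b) * cos (PI * b)) / (PI * sin (PI * b) ^ 2)))
    by (unfold zcot_deriv; field; split; [auto | lra]).
  assert (0 <= (PI * b - sin (PI * b) * cos (PI * b)) / (PI * sin (PI * b) ^ 2))
    by (apply Rdiv_le_0_compat; nra).
  lra.
Qed.

Lemma zcot_deriv_odd z : zcot_deriv (- z) = - zcot_deriv z.
Proof.
  unfold zcot_deriv. replace (PI * - z) with (- (PI * z)) by ring. rewrite sin_neg, cos_neg.
  destruct (Req_dec (sin (PI * z)) 0) as [E|E].
  - rewrite E, Ropp_0. unfold Rdiv. rewrite Rmult_0_r, pow_i, Rinv_0 by lia. ring.
  - field. split; auto. apply PI_neq0.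
Qed.

Lemma zcot_deriv_nonneg a : -1 < a < 0 -> 0 <= zcot_deriv a.
Proof.
  intros. replace a with (- (- a)) by ring. rewrite zcot_deriv_odd.
  pose proof (zcot_deriv_nonpos (- a)). lra.
Qed.

Lemma zcot_le z : -1 < z < 1 -> z <> 0 -> zcot z <= / PI ^ 2.
Proof.
  intros Hz Hz0. pose proof (sin_PI_mul_neq0 z Hz Hz0) as Hs. pose proof PI_RGT_0.
  pose proof (sin_PI_mul_sqr_pos z Hz Hz0).
  assert ((PI * z * cos (PI * z) - sin (PI * z)) * sin (PI * z) <= 0)
    by (apply x_cos_sub_sin_mul_sin_le0; nra).
  replace (zcot z) with (PI * z * cos (PI * z) * sin (PI * z) / sin (PI * z) ^ 2 / PI ^ 2)
    by (unfold zcot; field; split; [auto | apply PI_neq0]).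
  rewrite <- (Rmult_1_l (/ PI ^ 2)). unfold Rdiv at 1.
  apply Rmult_le_compat_r; [apply Rlt_le, Rinv_0_lt_compat; nra|].
  apply (Rmult_le_reg_r (sin (PI * z) ^ 2)); auto.
  unfold Rdiv. rewrite Rmult_assoc, Rinv_l by lra. nra.
Qed.

Lemma zcot_sub_mul_deriv_ge z : -1 < z < 1 -> z <> 0 -> / PI ^ 2 <= zcot z - z * zcot_deriv z.
Proof.
  intros Hz Hz0. pose proof (sin_PI_mul_neq0 z Hz Hz0) as Hs. pose proof PI_RGT_0.
  pose proof (sin_PI_mul_sqr_pos z Hz Hz0).
  assert (sin (PI * z) ^ 2 <= (PI * z) ^ 2).
  { pose proof (abs_sin_le (PI * z)) as A. pose proof (Rabs_pos (sin (PI * z))).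
    rewrite <- !(pow2_abs (_ * _)), <- (pow2_abs (sin _)). nra. }
  replace (zcot z - z * zcot_deriv z) with (z ^ 2 / sin (PI * z) ^ 2)
    by (unfold zcot, zcot_deriv; field; split; [auto | apply PI_neq0]).
  apply (Rmult_le_reg_r (PI ^ 2 * sin (PI * z) ^ 2)); [nra|].
  replace (/ PI ^ 2 * (PI ^ 2 * sin (PI * z) ^ 2)) with (sin (PI * z) ^ 2)
    by (field; apply PI_neq0).
  replace (z ^ 2 / sin (PI * z) ^ 2 * (PI ^ 2 * sin (PI * z) ^ 2)) with ((PI * z) ^ 2)
    by (field; auto).
  lra.
Qed.

(* On a cell [a, b] of (-1, 1) not containing 0 this is monotonicity of
   [zcot_deriv]; across 0 the jump of [zcot] is absorbed using the two bounds above. *)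
Lemma zcot_cell_upper a b : a < b -> -1 < a -> b < 1 -> a <> 0 -> b <> 0 ->
  zcot_deriv b * (b - a) <= zcot b - zcot a.
Proof.
  intros Hab Ha Hb Ha0 Hb0.
  destruct (Rlt_or_le 0 a); [|destruct (Rlt_or_le b 0)].
  1, 2: destruct (zcot_mvt a b) as [c [Hc ->]]; [lra | red; lra |];
        apply Rmult_le_compat_r; [lra | apply zcot_deriv_decreasing; red; lra].
  assert (a < 0) by (destruct H; [lra | congruence]).
  assert (0 < b) by (destruct H0; [lra | congruence]).
  pose proof (zcot_sub_mul_deriv_ge b ltac:(lra) Hb0).
  pose proof (zcot_le a ltac:(lra) Ha0).
  pose proof (zcot_deriv_nonpos b ltac:(lra)).
  nra.
Qed.

Lemma zcot_cell_lower a b : a < b -> -1 < a -> b < 1 -> a <> 0 -> b <> 0 ->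
  zcot b - zcot a <= zcot_deriv a * (b - a).
Proof.
  intros Hab Ha Hb Ha0 Hb0.
  destruct (Rlt_or_le 0 a); [|destruct (Rlt_or_le b 0)].
  1, 2: destruct (zcot_mvt a b) as [c [Hc ->]]; [lra | red; lra |];
        apply Rmult_le_compat_r; [lra | apply zcot_deriv_decreasing; red; lra].
  assert (a < 0) by (destruct H; [lra | congruence]).
  assert (0 < b) by (destruct H0; [lra | congruence]).
  pose proof (zcot_sub_mul_deriv_ge a ltac:(lra) Ha0).
  pose proof (zcot_le b ltac:(lra) Hb0).
  pose proof (zcot_deriv_nonneg a ltac:(lra)).
  nra.
Qed.

(** * Vaaler's inequality *)

Lemma sin_sqr_sub_mul_PI x (k : nat) : sin (x - INR k * PI) ^ 2 = sin x ^ 2.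
Proof.
  induction k as [|k IH].
  - replace (x - INR 0 * PI) with x by (simpl; ring). reflexivity.
  - rewrite S_INR. replace (x - (INR k + 1) * PI) with (x - INR k * PI - PI) by ring.
    rewrite sin_minus, sin_PI, cos_PI, <- IH. ring.
Qed.

Section OffNodes.
Variable M : nat.
Let L := kernel_len M.
Variable y : R.
Hypothesis y_range : 0 < y < 1.
Hypothesis y_off_nodes : forall k : nat, y - INR k / L <> 0.

Let z (k : nat) := y - INR k / L.

Let L_pos : 0 < L.
Proof. apply kernel_len_pos. Qed.

Let sin_y_neq0 : sin (PI * y) <> 0.
Proof. apply sin_PI_mul_neq0; lra. Qed.

Let z_range k : (k <= S M)%nat -> -1 < z k < 1.
Proof.
  intros Hk. assert (0 <= INR k / L <= 1).
  { split; [apply Rdiv_le_0_compat; [apply pos_INR | lra]|].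
    apply (Rmult_le_reg_r L); auto. unfold Rdiv. rewrite Rmult_assoc, Rinv_l by lra.
    rewrite Rmult_1_r, Rmult_1_l. apply le_INR; auto. }
  unfold z; lra.
Qed.

Let z_step k : z k - z (S k) = / L.
Proof. unfold z. rewrite S_INR. field. lra. Qed.

Let z_0 : z 0 = y.
Proof. unfold z; simpl; field; lra. Qed.

Let z_last : z (S M) = y - 1.
Proof. unfold z, L, kernel_len. field. apply Rgt_not_eq, lt_0_INR; lia. Qed.

Let zcot_period_diff : zcot y - zcot (y - 1) = cos (PI * y) / (PI * sin (PI * y)).
Proof.
  unfold zcot. replace (PI * (y - 1)) with (PI * y - PI) by ring.
  rewrite sin_minus, cos_minus, sin_PI, cos_PI.
  field. split; auto. apply PI_neq0.
Qed.

Let zcot_deriv_period : zcot_deriv (y - 1) = zcot_deriv y + / sin (PI * y) ^ 2.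
Proof.
  unfold zcot_deriv. replace (PI * (y - 1)) with (PI * y - PI) by ring.
  rewrite sin_minus, cos_minus, sin_PI, cos_PI.
  field. split; auto. apply PI_neq0.
Qed.

Let cell_hyps k : (k < S M)%nat ->
  z (S k) < z k /\ -1 < z (S k) /\ z k < 1 /\ z (S k) <> 0 /\ z k <> 0.
Proof.
  intros Hk. pose proof (z_step k). pose proof (Rinv_0_lt_compat L L_pos).
  destruct (z_range k) as [A1 A2]; [lia|]. destruct (z_range (S k)) as [B1 B2]; [lia|].
  repeat split; try lra; apply y_off_nodes.
Qed.

(* The sum of [zcot_deriv] over the nodes is a Riemann sum for [zcot] over one
   period; monotonicity on each cell gives both bounds. *)
Lemma rsum_zcot_deriv_upper :
  rsum (S M) (fun k => zcot_deriv (z k)) <= L * (cos (PI * y) / (PI * sin (PI * y))).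
Proof.
  assert (R : rsum (S M) (fun k => / L * zcot_deriv (z k)) <= rsum (S M) (fun k => zcot (z k) - zcot (z (S k)))).
  { apply rsum_le. intros k Hk. rewrite <- (z_step k), Rmult_comm.
    destruct (cell_hyps k Hk) as (? & ? & ? & ? & ?). apply zcot_cell_upper; auto. }
  rewrite rsum_scal, rsum_telescope, z_last, z_0, zcot_period_diff in R.
  apply (Rmult_le_reg_l (/ L)); [apply Rinv_0_lt_compat; lra|].
  rewrite <- Rmult_assoc, Rinv_l, Rmult_1_l by lra. auto.
Qed.

Lemma rsum_zcot_deriv_lower :
  L * (cos (PI * y) / (PI * sin (PI * y))) <= rsum (S M) (fun k => zcot_deriv (z k)) + / sin (PI * y) ^ 2.
Proof.
  assert (R : rsum (S M) (fun k => zcot (z k) - zcot (z (S k))) <= rsum (S M) (fun k => / L * zcot_deriv (z (S k)))).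
  { apply rsum_le. intros k Hk. rewrite <- (z_step k), Rmult_comm.
    destruct (cell_hyps k Hk) as (? & ? & ? & ? & ?). apply zcot_cell_lower; auto. }
  rewrite rsum_scal, rsum_telescope, z_last, z_0, zcot_period_diff in R.
  assert (E : rsum (S M) (fun k => zcot_deriv (z (S k)))
              = rsum (S M) (fun k => zcot_deriv (z k)) - zcot_deriv y + zcot_deriv (y - 1)).
  { pose proof (rsum_shift (S M) (fun k => zcot_deriv (z k))) as Sh.
    rewrite rsum_S, z_0, z_last in Sh. lra. }
  rewrite E, zcot_deriv_period in R.
  apply (Rmult_le_reg_l (/ L)); [apply Rinv_0_lt_compat; lra|].
  rewrite <- Rmult_assoc, Rinv_l, Rmult_1_l by lra. lra.
Qed.

Let sin_L_node_shift k : sin (PI * L * z k) ^ 2 = sin (PI * L * y) ^ 2.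
Proof.
  rewrite <- (sin_sqr_sub_mul_PI (PI * L * y) k). unfold z. f_equal. f_equal. field. lra.
Qed.

Lemma vaaler_error_closed_form : vaaler_poly M y - (y - / 2) =
  sin (PI * L * y) ^ 2 / L ^ 2 * (rsum (S M) (fun k => zcot_deriv (z k))
    + / 2 / sin (PI * y) ^ 2 - L * (cos (PI * y) / (PI * sin (PI * y)))).
Proof.
  rewrite vaaler_poly_nodes. fold L.
  rewrite <- (Rmult_1_r (y - / 2)) at 1. rewrite <- (fejer_partition M y). fold L.
  set (S2 := sin (PI * L * y) ^ 2).
  assert (Nodes : rsum (S M) (fun k => (INR k / L - / 2) * fejer M (y - INR k / L))
      + rsum (S M) (fun k => fejer_sine M (y - INR k / L))
      - (y - / 2) * rsum (S M) (fun k => fejer M (y - INR k / L))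
      = S2 / L ^ 2 * rsum (S M) (fun k => zcot_deriv (z k))).
  { rewrite <- !rsum_scal, <- rsum_plus, <- rsum_minus. apply rsum_ext. intros k Hk.
    assert (Hs : sin (PI * z k) <> 0) by (apply sin_PI_mul_neq0; [apply z_range; lia | apply y_off_nodes]).
    change (y - INR k / L) with (z k).
    rewrite fejer_closed, fejer_sine_closed by auto. fold L. rewrite sin_L_node_shift. fold S2.
    unfold zcot_deriv. replace (INR k / L - / 2) with (y - / 2 - z k) by (unfold z; ring).
    field. repeat split; auto; try lra. apply PI_neq0. }
  rewrite (fejer_closed M y), (fejer_sine_closed M y) by auto. fold L S2.
  transitivity ((rsum (S M) (fun k => (INR k / L - / 2) * fejer M (y - INR k / L))
      + rsum (S M) (fun k => fejer_sine M (y - INR k / L))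
      - (y - / 2) * rsum (S M) (fun k => fejer M (y - INR k / L)))
      + / 2 * (S2 / (L ^ 2 * sin (PI * y) ^ 2)) - L * (cos (PI * y) * S2 / (PI * L ^ 2 * sin (PI * y))));
    [ring|].
  rewrite Nodes. field. repeat split; auto; try lra. apply PI_neq0.
Qed.

Lemma vaaler_off_nodes : Rabs (y - / 2 - vaaler_poly M y) <= vaaler_major M y.
Proof.
  pose proof rsum_zcot_deriv_upper. pose proof rsum_zcot_deriv_lower.
  assert (Maj : vaaler_major M y = sin (PI * L * y) ^ 2 / L ^ 2 * (/ 2 / sin (PI * y) ^ 2)).
  { unfold vaaler_major. rewrite (fejer_closed M y sin_y_neq0). fold L. field. split; auto; lra. }
  rewrite Maj. replace (y - / 2 - vaaler_poly M y) with (- (vaaler_poly M y - (y - / 2))) by ring.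
  rewrite vaaler_error_closed_form, Rabs_Ropp, Rabs_mult, Rabs_pos_eq
    by (apply Rdiv_le_0_compat; [apply pow2_ge_0 | apply pow_lt; lra]).
  apply Rmult_le_compat_l; [apply Rdiv_le_0_compat; [apply pow2_ge_0 | apply pow_lt; lra]|].
  apply Rabs_le.
  replace (/ 2 / sin (PI * y) ^ 2) with (/ sin (PI * y) ^ 2 - / 2 / sin (PI * y) ^ 2) at 1
    by (field; auto).
  lra.
Qed.

End OffNodes.

Section AtNodes.
Variable M : nat.
Let L := kernel_len M.

Lemma kernels_vanish_at_nodes (j k : nat) : (j <= M)%nat -> (k <= M)%nat -> k <> j ->
  fejer M (INR j / L - INR k / L) = 0 /\ fejer_sine M (INR j / L - INR k / L) = 0.
Proof.
  intros Hj Hk Hkj. pose proof (kernel_len_pos M) as HL. fold L in HL.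
  assert (INR k <= INR M) by (apply le_INR; lia).
  assert (INR j <= INR M) by (apply le_INR; lia).
  assert (L = INR M + 1) by (apply S_INR).
  pose proof (pos_INR j). pose proof (pos_INR k).
  assert (Ejk : INR j / L - INR k / L = (INR j - INR k) / L) by (field; lra).
  assert (Hs : sin (PI * (INR j / L - INR k / L)) <> 0).
  { rewrite Ejk. apply sin_PI_mul_neq0.
    - split; apply (Rmult_lt_reg_r L); auto; unfold Rdiv; rewrite Rmult_assoc, Rinv_l; lra.
    - intros E. apply Hkj, INR_eq. apply (Rmult_eq_reg_r (/ L)).
      + unfold Rdiv in E. lra.
      + apply Rgt_not_eq, Rinv_0_lt_compat; lra. }
  assert (Hz : sin (PI * L * (INR j / L - INR k / L)) = 0).
  { replace (PI * L * (INR j / L - INR k / L)) with (IZR (Z.of_nat j - Z.of_nat k) * PI).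
    - apply sin_eq_0_1. eexists; reflexivity.
    - rewrite Ejk, minus_IZR, <- !INR_IZR_INZ. field. lra. }
  rewrite fejer_closed, fejer_sine_closed by auto. fold L. rewrite Hz.
  split; field; repeat split; auto; try lra. apply PI_neq0.
Qed.

Lemma vaaler_at_node (j : nat) : (1 <= j <= M)%nat ->
  Rabs (INR j / L - / 2 - vaaler_poly M (INR j / L)) <= vaaler_major M (INR j / L).
Proof.
  intros Hj. pose proof (kernel_len_pos M) as HL. fold L in HL. set (y := INR j / L).
  assert (Gz : forall k : nat, (k <= M)%nat -> fejer_sine M (y - INR k / L) = 0).
  { intros k Hk. destruct (Nat.eq_dec k j) as [->|Hkj].
    - replace (y - INR j / L) with 0 by (unfold y; ring). apply fejer_sine_0.
    - apply (kernels_vanish_at_nodes j k); lia. }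
  assert (Ey : forall g : R -> R, g y = g (y - INR 0 / L)) by (intros; f_equal; simpl; field; lra).
  assert (Fy : fejer M y = 0) by (rewrite (Ey (fejer M)); apply (kernels_vanish_at_nodes j 0); lia).
  assert (Gy : fejer_sine M y = 0) by (rewrite (Ey (fejer_sine M)); apply Gz; lia).
  assert (V : vaaler_poly M y = y - / 2).
  { rewrite vaaler_poly_nodes. fold L. rewrite Fy, Gy.
    rewrite (rsum_ext (S M) (fun k => fejer_sine M (y - INR k / L)) (fun _ => 0))
      by (intros; apply Gz; lia).
    rewrite rsum_zero, (rsum_single (S M) j); [| lia |].
    - replace (y - INR j / L) with 0 by (unfold y; ring). rewrite fejer_0. unfold y. ring.
    - intros k Hk Hkj. replace (fejer M (y - INR k / L)) with 0; [ring|].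
      symmetry. apply (kernels_vanish_at_nodes j k); lia. }
  unfold vaaler_major. rewrite Fy, V, Rminus_diag, Rabs_R0. lra.
Qed.

Lemma vaaler_unit_interval y : 0 <= y < 1 -> Rabs (y - / 2 - vaaler_poly M y) <= vaaler_major M y.
Proof.
  intros Hy. pose proof (kernel_len_pos M) as HL. fold L in HL.
  destruct (Req_dec y 0) as [->|Hy0].
  - rewrite vaaler_poly_0. unfold vaaler_major. rewrite fejer_0.
    replace (0 - / 2 - 0) with (- / 2) by ring. rewrite Rabs_Ropp, Rabs_pos_eq; lra.
  - destruct (classic (exists k : nat, y - INR k / L = 0)) as [[k Hk]|Hoff].
    + assert (Ey : y = INR k / L) by lra.
      assert (INR k < INR (S M)).
      { apply (Rmult_lt_reg_r (/ L)); [apply Rinv_0_lt_compat; lra|].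
        fold (INR k / L). rewrite <- Ey. unfold L, kernel_len. rewrite Rinv_r; [lra|].
        apply Rgt_not_eq, lt_0_INR; lia. }
      assert (k <> 0%nat) by (intros ->; apply Hy0; rewrite Ey; simpl; unfold Rdiv; ring).
      apply INR_lt in H. rewrite Ey. apply vaaler_at_node. lia.
    + apply vaaler_off_nodes; [lra|]. intros k E. apply Hoff. exists k; auto.
Qed.

End AtNodes.

Lemma sin_2_IZR_PI_shift t (m : Z) : sin (t + 2 * IZR m * PI) = sin t.
Proof.
  destruct (Z.le_gt_cases 0 m).
  - rewrite <- (Z2Nat.id m), <- INR_IZR_INZ by auto. apply sin_period.
  - replace m with (- Z.of_nat (Z.to_nat (- m)))%Z by lia. rewrite opp_IZR, <- INR_IZR_INZ.
    rewrite <- (sin_period (t + 2 * - INR (Z.to_nat (- m)) * PI) (Z.to_nat (- m))).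
    f_equal. ring.
Qed.

Lemma cos_2_IZR_PI_shift t (m : Z) : cos (t + 2 * IZR m * PI) = cos t.
Proof.
  destruct (Z.le_gt_cases 0 m).
  - rewrite <- (Z2Nat.id m), <- INR_IZR_INZ by auto. apply cos_period.
  - replace m with (- Z.of_nat (Z.to_nat (- m)))%Z by lia. rewrite opp_IZR, <- INR_IZR_INZ.
    rewrite <- (cos_period (t + 2 * - INR (Z.to_nat (- m)) * PI) (Z.to_nat (- m))).
    f_equal. ring.
Qed.

Lemma harmonic_arg_shift (i : nat) (y : R) (n : Z) :
  2 * PI * INR (S i) * (y + IZR n) = 2 * PI * INR (S i) * y + 2 * IZR (Z.of_nat (S i) * n) * PI.
Proof. rewrite mult_IZR, <- INR_IZR_INZ. ring. Qed.

Lemma vaaler_poly_periodic M y (n : Z) : vaaler_poly M (y + IZR n) = vaaler_poly M y.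
Proof.
  unfold vaaler_poly. f_equal. apply rsum_ext. intros i _.
  rewrite harmonic_arg_shift, sin_2_IZR_PI_shift. reflexivity.
Qed.

Lemma vaaler_major_periodic M y (n : Z) : vaaler_major M (y + IZR n) = vaaler_major M y.
Proof.
  unfold vaaler_major, fejer. do 4 f_equal. apply rsum_ext. intros i _.
  rewrite harmonic_arg_shift, cos_2_IZR_PI_shift. reflexivity.
Qed.

Definition sawtooth_error (M : nat) (x : R) : R := x - IZR (floorZ x) - / 2 - vaaler_poly M x.

Theorem vaaler_sawtooth_error M x : Rabs (sawtooth_error M x) <= vaaler_major M x.
Proof.
  unfold sawtooth_error. set (y := x - IZR (floorZ x)).
  assert (Ex : x = y + IZR (floorZ x)) by (unfold y; ring).
  rewrite Ex at 1 2. rewrite vaaler_poly_periodic, vaaler_major_periodic.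
  apply vaaler_unit_interval. unfold y, floorZ. destruct (base_Int_part x). lra.
Qed.

Definition lsumC (l : list Z) (f : Z -> C) : C := fold_right (fun k acc => Cplus (f k) acc) 0 l.
Definition lsumR (l : list Z) (f : Z -> R) : R := fold_right (fun k acc => f k + acc) 0 l.

Lemma sumC_lsumC a b f : sumC a b f = lsumC (Zrange a b) f.
Proof. reflexivity. Qed.

Lemma sumR_lsumR a b f : sumR a b f = lsumR (Zrange a b) f.
Proof. reflexivity. Qed.

Lemma lsumC_ext l f g : (forall k, In k l -> f k = g k) -> lsumC l f = lsumC l g.
Proof. induction l; simpl; intros Hfg; auto. rewrite Hfg, IHl; auto. Qed.

Lemma lsumC_plus l f g : lsumC l (fun k => Cplus (f k) (g k)) = Cplus (lsumC l f) (lsumC l g).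
Proof. induction l; simpl; [ring | rewrite IHl; ring]. Qed.

Lemma lsumC_minus l f g : lsumC l (fun k => Cminus (f k) (g k)) = Cminus (lsumC l f) (lsumC l g).
Proof. induction l; simpl; [ring | rewrite IHl; ring]. Qed.

Lemma lsumC_scal l c f : lsumC l (fun k => Cmult c (f k)) = Cmult c (lsumC l f).
Proof. induction l; simpl; [ring | rewrite IHl; ring]. Qed.

Lemma lsumC_zero l : lsumC l (fun _ => 0) = 0.
Proof. induction l; simpl; [reflexivity | rewrite IHl; ring]. Qed.

Lemma lsumC_app l1 l2 f : lsumC (l1 ++ l2) f = Cplus (lsumC l1 f) (lsumC l2 f).
Proof. induction l1; simpl; [ring | rewrite IHl1; ring]. Qed.

Lemma lsumC_swap l1 l2 (f : Z -> Z -> C) :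
  lsumC l1 (fun m => lsumC l2 (fun h => f m h)) = lsumC l2 (fun h => lsumC l1 (fun m => f m h)).
Proof. induction l1; simpl; [rewrite lsumC_zero | rewrite IHl1, <- lsumC_plus]; auto. Qed.

Lemma lsumC_RtoC l g : lsumC l (fun k => RtoC (g k)) = RtoC (lsumR l g).
Proof. induction l; simpl; auto. rewrite IHl, RtoC_plus. reflexivity. Qed.

Lemma lsumC_norm l f : Cmod (lsumC l f) <= lsumR l (fun k => Cmod (f k)).
Proof.
  induction l; simpl; [rewrite Cmod_0; lra|].
  eapply Rle_trans; [apply Cmod_triangle | lra].
Qed.

Lemma lsumR_le l f g : (forall k, In k l -> f k <= g k) -> lsumR l f <= lsumR l g.
Proof.
  induction l; simpl; intros Hfg; [lra|].
  pose proof (Hfg a (or_introl eq_refl)).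
  assert (lsumR l f <= lsumR l g) by (apply IHl; auto). lra.
Qed.

Lemma lsumR_plus l f g : lsumR l (fun k => f k + g k) = lsumR l f + lsumR l g.
Proof. induction l; simpl; [ring | rewrite IHl; ring]. Qed.

Lemma lsumR_scal l c f : lsumR l (fun k => c * f k) = c * lsumR l f.
Proof. induction l; simpl; [ring | rewrite IHl; ring]. Qed.

Lemma In_Zrange a b h : In h (Zrange a b) -> (a <= h <= b)%Z.
Proof.
  unfold Zrange. intros Hin. apply in_map_iff in Hin.
  destruct Hin as [i [E Hi]]. apply in_seq in Hi. lia.
Qed.

Lemma Zrange_nil a b : (b < a)%Z -> Zrange a b = nil.
Proof. intros. unfold Zrange. replace (Z.to_nat (b - a + 1)) with O by lia. reflexivity. Qed.

Lemma Zrange_cons a b : (a <= b)%Z -> Zrange a b = a :: Zrange (a + 1) b.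
Proof.
  intros. unfold Zrange. replace (Z.to_nat (b - a + 1)) with (S (Z.to_nat (b - (a + 1) + 1))) by lia.
  simpl. f_equal; [lia|]. rewrite <- seq_shift, map_map. apply map_ext. intros; lia.
Qed.

Lemma Zrange_snoc a b : (a <= b + 1)%Z -> Zrange a (b + 1) = Zrange a b ++ (b + 1)%Z :: nil.
Proof.
  intros. unfold Zrange. replace (Z.to_nat (b + 1 - a + 1)) with (S (Z.to_nat (b - a + 1))) by lia.
  rewrite seq_S, map_app. simpl. f_equal. f_equal. lia.
Qed.

Lemma sumC_empty a b f : (b < a)%Z -> sumC a b f = 0.
Proof. intros. rewrite sumC_lsumC, Zrange_nil; auto. Qed.

Lemma sumC_snoc a b f : (a <= b + 1)%Z -> sumC a (b + 1) f = Cplus (sumC a b f) (f (b + 1)%Z).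
Proof. intros. rewrite !sumC_lsumC, Zrange_snoc, lsumC_app by auto. simpl. ring. Qed.

Lemma sumC_symmetric (N : nat) (f : Z -> C) (g : nat -> R) :
  (forall i, (i < N)%nat -> Cplus (f (Z.of_nat (S i))) (f (- Z.of_nat (S i))%Z) = RtoC (g i)) ->
  sumC (- Z.of_nat N) (Z.of_nat N) f = Cplus (f 0%Z) (RtoC (rsum N g)).
Proof.
  induction N as [|N IH]; intros Hfg.
  - simpl. rewrite sumC_lsumC. unfold Zrange. simpl. ring.
  - rewrite sumC_lsumC in *. replace (Z.of_nat (S N)) with (Z.of_nat N + 1)%Z by lia.
    rewrite Zrange_snoc, Zrange_cons by lia.
    replace (- (Z.of_nat N + 1) + 1)%Z with (- Z.of_nat N)%Z by lia.
    rewrite lsumC_app. change (lsumC (?a :: ?l) f) with (Cplus (f a) (lsumC l f)).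
    rewrite IH by (intros; apply Hfg; lia).
    rewrite rsum_S, RtoC_plus, <- (Hfg N) by lia.
    replace (Z.of_nat (S N)) with (Z.of_nat N + 1)%Z by lia.
    change (lsumC nil f) with (RtoC 0). ring.
Qed.

Lemma e_add x y : e (x + y) = Cmult (e x) (e y).
Proof.
  unfold e. replace (2 * PI * (x + y)) with (2 * PI * x + 2 * PI * y) by ring.
  rewrite cos_plus, sin_plus. apply injective_projections; simpl; ring.
Qed.

Lemma Cmod_e x : Cmod (e x) = 1.
Proof.
  unfold Cmod, e. simpl fst; simpl snd. rewrite <- sqrt_1. f_equal.
  pose proof (sin2_cos2 (2 * PI * x)) as P. unfold Rsqr in P. nra.
Qed.

Lemma Cmod_e_sub a b : Cmod (Cminus (e a) (e b)) = 2 * Rabs (sin (PI * (a - b))).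
Proof.
  unfold Cmod, Cminus, Cplus, Copp, e. simpl fst; simpl snd.
  set (p := PI * (a - b)).
  replace ((cos (2 * PI * a) + - cos (2 * PI * b)) ^ 2 + (sin (2 * PI * a) + - sin (2 * PI * b)) ^ 2)
    with (Rsqr (2 * sin p)).
  - rewrite sqrt_Rsqr_abs, Rabs_mult, (Rabs_pos_eq 2); lra.
  - pose proof (sin2_cos2 (2 * PI * a)). pose proof (sin2_cos2 (2 * PI * b)).
    pose proof (cos_minus (2 * PI * a) (2 * PI * b)) as Cm.
    replace (2 * PI * a - 2 * PI * b) with (2 * p) in Cm by (unfold p; ring).
    rewrite cos_2a_sin in Cm. unfold Rsqr in *. nra.
Qed.

(** * Fourier expansions of Vaaler's polynomials *)

Definition vaaler_fourier (M : nat) (h : Z) : C :=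
  (0, IZR (Z.sgn h) * vaaler_coef M (IZR (Z.abs h)) / 2).

Definition major_fourier (M : nat) (h : Z) : C :=
  RtoC (/ (2 * kernel_len M) * (1 - IZR (Z.abs h) / kernel_len M)).

Lemma vaaler_fourier_0 M : vaaler_fourier M 0 = 0.
Proof.
  unfold vaaler_fourier. change (Z.sgn 0) with 0%Z.
  apply injective_projections; simpl; field.
Qed.

Lemma e_harmonic_pos i x :
  e (IZR (Z.of_nat (S i)) * x) = (cos (2 * PI * INR (S i) * x), sin (2 * PI * INR (S i) * x)).
Proof. unfold e. rewrite <- INR_IZR_INZ. f_equal; f_equal; ring. Qed.

Lemma e_harmonic_neg i x :
  e (IZR (- Z.of_nat (S i)) * x) = (cos (2 * PI * INR (S i) * x), - sin (2 * PI * INR (S i) * x)).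
Proof.
  unfold e. rewrite opp_IZR, <- INR_IZR_INZ.
  replace (2 * PI * (- INR (S i) * x)) with (- (2 * PI * INR (S i) * x)) by ring.
  rewrite cos_neg, sin_neg. reflexivity.
Qed.

Lemma Zsgn_abs_harmonic i :
  Z.sgn (Z.of_nat (S i)) = 1%Z /\ Z.sgn (- Z.of_nat (S i)) = (-1)%Z /\
  Z.abs (Z.of_nat (S i)) = Z.of_nat (S i) /\ Z.abs (- Z.of_nat (S i)) = Z.of_nat (S i).
Proof. repeat split; lia. Qed.

Lemma vaaler_poly_fourier M x : RtoC (vaaler_poly M x) =
  sumC (- Z.of_nat M) (Z.of_nat M) (fun h => Cmult (vaaler_fourier M h) (e (IZR h * x))).
Proof.
  rewrite (sumC_symmetric M _ (fun i => - (vaaler_coef M (INR (S i)) * sin (2 * PI * INR (S i) * x)))).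
  - replace (vaaler_poly M x) with
      (rsum M (fun i => - (vaaler_coef M (INR (S i)) * sin (2 * PI * INR (S i) * x)))).
    + rewrite vaaler_fourier_0. ring.
    + unfold vaaler_poly.
      rewrite (rsum_ext M _ (fun i => -1 * (vaaler_coef M (INR (S i)) * sin (2 * PI * INR (S i) * x))))
        by (intros; ring).
      rewrite rsum_scal. ring.
  - intros i _. rewrite e_harmonic_pos, e_harmonic_neg. unfold vaaler_fourier.
    destruct (Zsgn_abs_harmonic i) as (-> & -> & -> & ->). rewrite <- INR_IZR_INZ.
    apply injective_projections; simpl; field.
Qed.

Lemma vaaler_major_fourier M x : RtoC (vaaler_major M x) =
  sumC (- Z.of_nat M) (Z.of_nat M) (fun h => Cmult (major_fourier M h) (e (IZR h * x))).
Proof.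
  pose proof (kernel_len_pos M) as HL.
  rewrite (sumC_symmetric M _ (fun i => / kernel_len M *
             ((1 - INR (S i) / kernel_len M) * cos (2 * PI * INR (S i) * x)))).
  - unfold vaaler_major, fejer, major_fourier, e. rewrite rsum_scal.
    change (Z.abs 0) with 0%Z. rewrite Rmult_0_l, Rmult_0_r, cos_0, sin_0.
    change (1, 0) with (RtoC 1). rewrite <- RtoC_mult, <- RtoC_plus.
    f_equal. field. lra.
  - intros i _. rewrite e_harmonic_pos, e_harmonic_neg. unfold major_fourier.
    destruct (Zsgn_abs_harmonic i) as (_ & _ & -> & ->). rewrite <- INR_IZR_INZ.
    apply injective_projections; simpl; field; lra.
Qed.

Lemma vaaler_coef_bound M n : (1 <= n <= M)%nat -> Rabs (vaaler_coef M (INR n)) * (PI * INR n) <= 1.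
Proof.
  intros Hn. pose proof (kernel_len_pos M) as HL. pose proof PI_RGT_0.
  set (L := kernel_len M) in *.
  assert (Hh : 0 < INR n < L) by (split; [apply lt_0_INR | apply lt_INR]; lia).
  set (u := PI * INR n / L).
  assert (Hu : 0 < u < PI).
  { unfold u. split; [apply Rdiv_lt_0_compat; nra|].
    apply (Rmult_lt_reg_r L); [lra|]. unfold Rdiv. rewrite Rmult_assoc, Rinv_l; nra. }
  assert (Hs : 0 < sin u) by (apply sin_gt_0; lra).
  (* [vaaler_coef] times [pi n] is a convex combination of [u cot u] and [1] *)
  assert (E : vaaler_coef M (INR n) * (PI * INR n) = (1 - u / PI) * (u * cos u / sin u) + u / PI).
  { assert (En : INR n = u * L / PI) by (unfold u; field; lra).
    unfold vaaler_coef. fold L. change (PI * INR n / L) with u. rewrite En.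
    field. repeat split; lra. }
  assert (U1 : u * cos u <= sin u) by (apply x_cos_le_sin; lra).
  assert (U2 : (PI - u) * cos (PI - u) <= sin (PI - u)) by (apply x_cos_le_sin; lra).
  rewrite sin_PI_x, cos_minus, cos_PI, sin_PI in U2.
  assert (X1 : u * cos u / sin u <= 1).
  { apply (Rmult_le_reg_r (sin u)); auto. unfold Rdiv. rewrite Rmult_assoc, Rinv_l; lra. }
  assert (X2 : - (u / PI) <= (1 - u / PI) * (u * cos u / sin u)).
  { replace ((1 - u / PI) * (u * cos u / sin u)) with (u * ((PI - u) * cos u) / (PI * sin u))
      by (field; lra).
    apply (Rmult_le_reg_r (PI * sin u)); [nra|].
    unfold Rdiv. rewrite Rmult_assoc, Rinv_l by nra.
    replace (- (u * / PI) * (PI * sin u)) with (- u * sin u) by (field; lra). nra. }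
  assert (Hw : 0 <= 1 - u / PI <= 1).
  { split; [|assert (0 <= u / PI) by (apply Rdiv_le_0_compat; lra); lra].
    assert (u / PI < 1); [|lra].
    apply (Rmult_lt_reg_r PI); auto. unfold Rdiv; rewrite Rmult_assoc, Rinv_l; lra. }
  assert (Y : (1 - u / PI) * (u * cos u / sin u) <= 1 - u / PI) by nra.
  rewrite <- (Rabs_pos_eq (PI * INR n)) by nra. rewrite <- Rabs_mult, E.
  apply Rabs_le. lra.
Qed.

Lemma Cmod_vaaler_fourier M h : Cmod (vaaler_fourier M h) = Rabs (vaaler_coef M (IZR (Z.abs h))) / 2 * Rabs (IZR (Z.sgn h)).
Proof.
  unfold vaaler_fourier, Cmod. simpl fst; simpl snd.
  replace (0 ^ 2 + (IZR (Z.sgn h) * vaaler_coef M (IZR (Z.abs h)) / 2) ^ 2)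
    with (Rsqr (IZR (Z.sgn h) * vaaler_coef M (IZR (Z.abs h)) / 2)) by (unfold Rsqr; ring).
  rewrite sqrt_Rsqr_abs. unfold Rdiv. rewrite !Rabs_mult, (Rabs_pos_eq (/ 2)) by lra. ring.
Qed.

(* The coefficient of [e (h x)] in V(x - 1/alpha) - V(x) has modulus at most min(1/alpha, 1/|h|). *)
Lemma vaaler_fourier_twist_bound M h alpha t :
  1 <= alpha -> (1 <= Z.abs h <= Z.of_nat M)%Z -> Rabs t = IZR (Z.abs h) / alpha ->
  Cmod (vaaler_fourier M h) * (2 * Rabs (sin (PI * t))) <= Rmin (/ alpha) (/ IZR (Z.abs h)).
Proof.
  intros Ha Hh Ht. rewrite Cmod_vaaler_fourier.
  replace (Rabs (IZR (Z.sgn h))) with 1 by (destruct h; simpl; try lia; rewrite Rabs_R1 || rewrite Rabs_m1; reflexivity).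
  set (n := Z.to_nat (Z.abs h)).
  assert (En : IZR (Z.abs h) = INR n) by (unfold n; rewrite INR_IZR_INZ, Z2Nat.id; [reflexivity | lia]).
  assert (Hn : (1 <= n <= M)%nat) by (unfold n; lia).
  rewrite En in *. pose proof (vaaler_coef_bound M n Hn) as Hc.
  set (c := Rabs (vaaler_coef M (INR n))) in *.
  assert (0 <= c) by apply Rabs_pos.
  assert (1 <= INR n) by (apply (le_INR 1); lia).
  pose proof PI_RGT_0. pose proof PI2_3_2.
  assert (S1 : Rabs (sin (PI * t)) <= 1) by (apply Rabs_le, SIN_bound).
  assert (S2 : Rabs (sin (PI * t)) <= PI * INR n / alpha).
  { eapply Rle_trans; [apply abs_sin_le|]. rewrite Rabs_mult, Rabs_pos_eq, Ht by lra. unfold Rdiv; lra. }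
  replace (c / 2 * 1 * (2 * Rabs (sin (PI * t)))) with (c * Rabs (sin (PI * t))) by field.
  apply Rmin_glb.
  - apply Rle_trans with (c * (PI * INR n) * / alpha).
    + replace (c * (PI * INR n) * / alpha) with (c * (PI * INR n / alpha)) by (field; lra).
      apply Rmult_le_compat_l; auto.
    + rewrite <- (Rmult_1_l (/ alpha)) at 2.
      apply Rmult_le_compat_r; auto. apply Rlt_le, Rinv_0_lt_compat; lra.
  - apply Rle_trans with c.
    + rewrite <- (Rmult_1_r c) at 2. apply Rmult_le_compat_l; auto.
    + apply (Rmult_le_reg_r (INR n)); [lra|]. rewrite Rinv_l by lra. nra.
Qed.

Lemma Cmod_major_fourier_le M h : (Z.abs h <= Z.of_nat M)%Z ->
  Cmod (major_fourier M h) <= / (2 * kernel_len M).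
Proof.
  intros Hh. pose proof (kernel_len_pos M) as HL.
  assert (Hab : 0 <= IZR (Z.abs h) <= kernel_len M - 1).
  { unfold kernel_len. rewrite S_INR, INR_IZR_INZ.
    apply IZR_le in Hh. split; [apply IZR_le; lia | lra]. }
  assert (0 <= 1 - IZR (Z.abs h) / kernel_len M <= 1).
  { split; [|assert (0 <= IZR (Z.abs h) / kernel_len M) by (apply Rdiv_le_0_compat; lra); lra].
    apply (Rmult_le_reg_r (kernel_len M)); auto. unfold Rdiv.
    rewrite Rmult_minus_distr_r, Rmult_assoc, Rinv_l by lra. lra. }
  assert (0 < / (2 * kernel_len M)) by (apply Rinv_0_lt_compat; lra).
  unfold major_fourier. rewrite Cmod_R, Rabs_pos_eq by nra. nra.
Qed.

(** * Counting the points of a Beatty sequence *)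

Lemma floorZ_spec x : IZR (floorZ x) <= x < IZR (floorZ x) + 1.
Proof. unfold floorZ. destruct (base_Int_part x). lra. Qed.

Lemma floorZ_unique x k : IZR k <= x < IZR k + 1 -> floorZ x = k.
Proof.
  intros Hk. pose proof (floorZ_spec x).
  assert (k < floorZ x + 1)%Z by (apply lt_IZR; rewrite plus_IZR; simpl; lra).
  assert (floorZ x < k + 1)%Z by (apply lt_IZR; rewrite plus_IZR; simpl; lra).
  lia.
Qed.

Lemma floorZ_le x y : x <= y -> (floorZ x <= floorZ y)%Z.
Proof.
  intros. pose proof (floorZ_spec x). pose proof (floorZ_spec y).
  assert (floorZ x < floorZ y + 1)%Z by (apply lt_IZR; rewrite plus_IZR; simpl; lra).
  lia.
Qed.

Lemma floorZ_IZR k : floorZ (IZR k) = k.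
Proof. apply floorZ_unique. lra. Qed.

(* The n with floor (n alpha + beta) = m are those with -floor ((beta - m) / alpha)
   <= n <= -floor ((beta - m - 1) / alpha) - 1. *)
Definition beatty_hits (alpha beta : R) (m : Z) : R :=
  IZR (floorZ ((beta - IZR m) / alpha) - floorZ ((beta - IZR m - 1) / alpha)).

Definition beatty_last (alpha beta : R) (m : Z) : Z :=
  (- floorZ ((beta - IZR m - 1) / alpha) - 1)%Z.

Section Beatty.
Variables (alpha beta : R) (f : Z -> C).
Hypothesis alpha_ge1 : 1 <= alpha.
Let F (n : Z) := f (floorZ (IZR n * alpha + beta)).
Let m0 := (floorZ beta + 1)%Z.

Let div_alpha_lt x c : x / alpha < c <-> x < c * alpha.
Proof.
  split; intros Hx.
  - apply (Rmult_lt_compat_r alpha) in Hx; [|lra].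
    unfold Rdiv in Hx. rewrite Rmult_assoc, Rinv_l, Rmult_1_r in Hx by lra. lra.
  - apply (Rmult_lt_reg_r alpha); [lra|]. unfold Rdiv. rewrite Rmult_assoc, Rinv_l by lra. lra.
Qed.

Let div_alpha_ge x c : c <= x / alpha <-> c * alpha <= x.
Proof.
  split; intros Hx.
  - apply (Rmult_le_compat_r alpha) in Hx; [|lra].
    unfold Rdiv in Hx. rewrite Rmult_assoc, Rinv_l, Rmult_1_r in Hx by lra. lra.
  - apply (Rmult_le_reg_r alpha); [lra|]. unfold Rdiv. rewrite Rmult_assoc, Rinv_l by lra. lra.
Qed.

Lemma beatty_last_step m :
  let p := floorZ ((beta - IZR m - 1) / alpha) in
  let q := floorZ ((beta - IZR (m + 1) - 1) / alpha) in
  (q <= p <= q + 1)%Z.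
Proof.
  intros p q.
  assert (Ex : (beta - IZR m - 1) / alpha = (beta - IZR (m + 1) - 1) / alpha + / alpha)
    by (rewrite plus_IZR; field; lra).
  assert (Hinv : 0 < / alpha <= 1).
  { split; [apply Rinv_0_lt_compat; lra|]. rewrite <- Rinv_1. apply Rinv_le_contravar; lra. }
  pose proof (floorZ_spec ((beta - IZR m - 1) / alpha)) as Sp.
  pose proof (floorZ_spec ((beta - IZR (m + 1) - 1) / alpha)) as Sq. fold p q in Sp, Sq.
  split; [apply floorZ_le; rewrite Ex; lra|].
  assert (p < q + 2)%Z by (apply lt_IZR; rewrite plus_IZR; simpl; lra). lia.
Qed.

Lemma beatty_sum_upto (d : nat) : let m := (m0 - 1 + Z.of_nat d)%Z in
  (0 <= beatty_last alpha beta m)%Z /\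
  sumC 1 (beatty_last alpha beta m) F = sumC m0 m (fun k => Cmult (f k) (beatty_hits alpha beta k)).
Proof.
  induction d as [|d [IH1 IH2]]; intros m.
  - assert (E : beatty_last alpha beta m = 0%Z).
    { unfold beatty_last, m, m0. replace (floorZ beta + 1 - 1 + Z.of_nat 0)%Z with (floorZ beta) by lia.
      rewrite (floorZ_unique _ (-1)); [lia|]. pose proof (floorZ_spec beta).
      rewrite div_alpha_ge, div_alpha_lt. simpl. lra. }
    rewrite E, !sumC_empty by (unfold m; lia). split; [lia | reflexivity].
  - set (mp := (m0 - 1 + Z.of_nat d)%Z) in *.
    replace m with (mp + 1)%Z by (unfold m, mp; lia).
    destruct (beatty_last_step mp) as [Hqp Hpq].
    set (p := floorZ ((beta - IZR mp - 1) / alpha)) in *.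
    set (q := floorZ ((beta - IZR (mp + 1) - 1) / alpha)) in *.
    assert (Lm : beatty_last alpha beta mp = (- p - 1)%Z) by reflexivity.
    assert (Lm1 : beatty_last alpha beta (mp + 1) = (- q - 1)%Z) by reflexivity.
    assert (Hits : beatty_hits alpha beta (mp + 1) = IZR (p - q)).
    { unfold beatty_hits. f_equal. f_equal. unfold p. f_equal. rewrite plus_IZR. unfold Rdiv. ring. }
    rewrite Lm1, sumC_snoc, Hits by (unfold mp, m0 in *; lia).
    destruct (Z.eq_dec p q) as [Epq|Npq].
    + rewrite <- Epq, <- Lm, IH2, Z.sub_diag. split; [lia | ring].
    + assert (Epq : p = (q + 1)%Z) by lia.
      replace (- q - 1)%Z with (beatty_last alpha beta mp + 1)%Z by lia.
      rewrite sumC_snoc, IH2 by lia. replace (p - q)%Z with 1%Z by lia.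
      split; [lia|]. rewrite Cmult_1_r. f_equal. unfold F. f_equal.
      (* the new index n = -p satisfies floor (n alpha + beta) = mp + 1 *)
      apply floorZ_unique. rewrite Lm. replace (- p - 1 + 1)%Z with (- p)%Z by lia.
      pose proof (floorZ_spec ((beta - IZR mp - 1) / alpha)) as [Sp _].
      pose proof (floorZ_spec ((beta - IZR (mp + 1) - 1) / alpha)) as [_ Sq]. fold p q in Sp, Sq.
      replace (IZR q + 1) with (IZR p) in Sq by (rewrite Epq, plus_IZR; reflexivity).
      rewrite div_alpha_ge in Sp. rewrite div_alpha_lt in Sq.
      rewrite opp_IZR, !plus_IZR in *. simpl. lra.
Qed.

Lemma beatty_sum (K : R) : 0 <= K -> (forall k, Cmod (f k) <= 1) ->
  exists r, Cmod r <= 1 /\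
  sumC 1 (floorZ K) F =
  Cplus (sumC m0 (floorZ (beta + K * alpha)) (fun k => Cmult (f k) (beatty_hits alpha beta k))) r.
Proof.
  intros HK Hf. set (m1 := floorZ (beta + K * alpha)).
  assert (Hm1 : (m0 - 1 <= m1)%Z).
  { unfold m0, m1. replace (floorZ beta + 1 - 1)%Z with (floorZ beta) by lia. apply floorZ_le. nra. }
  destruct (beatty_sum_upto (Z.to_nat (m1 - (m0 - 1)))) as [_ E].
  replace (m0 - 1 + Z.of_nat (Z.to_nat (m1 - (m0 - 1))))%Z with m1 in E by lia.
  rewrite <- E. set (K' := floorZ K).
  pose proof (floorZ_spec (beta + K * alpha)) as S1. fold m1 in S1.
  pose proof (floorZ_spec K) as S2. fold K' in S2.
  assert (HK' : (0 <= K')%Z) by (rewrite <- (floorZ_IZR 0); apply floorZ_le; lra).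
  (* the last hit below m1 is floorZ K or floorZ K + 1 *)
  set (r := (beta - IZR m1 - 1) / alpha).
  assert (R1 : r < - K) by (unfold r; rewrite div_alpha_lt; lra).
  assert (R2 : - K - 1 <= r).
  { unfold r. rewrite div_alpha_ge. assert ((- K - 1) * alpha <= - K * alpha - 1) by nra. lra. }
  pose proof (floorZ_spec r) as S3.
  assert (G1 : (floorZ r < - K')%Z) by (apply lt_IZR; rewrite opp_IZR; lra).
  assert (G2 : (- K' - 3 < floorZ r)%Z).
  { apply lt_IZR. rewrite minus_IZR, opp_IZR. simpl. lra. }
  assert (EG : beatty_last alpha beta m1 = (- floorZ r - 1)%Z) by reflexivity.
  destruct (Z.eq_dec (beatty_last alpha beta m1) K') as [->|NK].
  - exists 0. split; [rewrite Cmod_0; lra | ring].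
  - replace (beatty_last alpha beta m1) with (K' + 1)%Z by lia. rewrite sumC_snoc by lia.
    exists (Copp (F (K' + 1)%Z)). split; [rewrite Cmod_opp; apply Hf | ring].
Qed.

End Beatty.

(** * Exponential sums *)

Lemma beatty_hits_vaaler M alpha beta m : 1 <= alpha ->
  let c := beta / alpha in
  beatty_hits alpha beta m = / alpha
    + (vaaler_poly M (c - / alpha - IZR m / alpha) - vaaler_poly M (c - IZR m / alpha))
    + (sawtooth_error M (c - / alpha - IZR m / alpha) - sawtooth_error M (c - IZR m / alpha)).
Proof.
  intros Ha c. unfold beatty_hits, sawtooth_error.
  replace ((beta - IZR m) / alpha) with (c - IZR m / alpha) by (unfold c; field; lra).
  replace ((beta - IZR m - 1) / alpha) with (c - / alpha - IZR m / alpha) by (unfold c; field; lra).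
  rewrite minus_IZR. ring.
Qed.

Section ExponentialSums.
Variable alpha : R.
Hypothesis alpha_ge1 : 1 <= alpha.
Variable M : nat.
Let lh := Zrange (- Z.of_nat M) (Z.of_nat M).

Let e_node h m c : e (IZR h * (c - IZR m / alpha)) = Cmult (e (IZR h * c)) (e (- IZR m * (IZR h / alpha))).
Proof. rewrite <- e_add. f_equal. field. lra. Qed.

Lemma lsum_vaaler_major_le l c :
  lsumR l (fun m => vaaler_major M (c - IZR m / alpha)) <=
  lsumR lh (fun h => Cmod (major_fourier M h) * Cmod (lsumC l (fun m => e (- IZR m * (IZR h / alpha))))).
Proof.
  eapply Rle_trans; [apply Rle_abs|]. rewrite <- Cmod_R, <- lsumC_RtoC.
  rewrite (lsumC_ext l _ (fun m => lsumC lh (fun h => Cmult (major_fourier M h) (e (IZR h * (c - IZR m / alpha))))))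
    by (intros; apply vaaler_major_fourier).
  rewrite lsumC_swap. eapply Rle_trans; [apply lsumC_norm|]. apply lsumR_le. intros h _.
  rewrite (lsumC_ext l _ (fun m => Cmult (Cmult (major_fourier M h) (e (IZR h * c))) (e (- IZR m * (IZR h / alpha)))))
    by (intros; rewrite e_node; ring).
  rewrite lsumC_scal, !Cmod_mult, Cmod_e. lra.
Qed.

Lemma lsum_vaaler_poly_diff l c (f : Z -> C) :
  lsumC l (fun m => Cmult (f m) (RtoC (vaaler_poly M (c - / alpha - IZR m / alpha) - vaaler_poly M (c - IZR m / alpha)))) =
  lsumC lh (fun h => Cmult (Cmult (vaaler_fourier M h) (Cminus (e (IZR h * (c - / alpha))) (e (IZR h * c))))
                           (lsumC l (fun m => Cmult (f m) (e (- IZR m * (IZR h / alpha)))))).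
Proof.
  rewrite (lsumC_ext l _ (fun m => lsumC lh (fun h =>
     Cmult (Cmult (vaaler_fourier M h) (Cminus (e (IZR h * (c - / alpha))) (e (IZR h * c))))
           (Cmult (f m) (e (- IZR m * (IZR h / alpha))))))).
  - rewrite lsumC_swap. apply lsumC_ext. intros h _. apply lsumC_scal.
  - intros m _. rewrite RtoC_minus, !vaaler_poly_fourier, !sumC_lsumC. fold lh.
    rewrite <- lsumC_minus, <- lsumC_scal. apply lsumC_ext. intros h _.
    rewrite !e_node. ring.
Qed.

Lemma vaaler_poly_diff_sum_bound l c (f : Z -> C) :
  Cmod (lsumC l (fun m => Cmult (f m)
     (RtoC (vaaler_poly M (c - / alpha - IZR m / alpha) - vaaler_poly M (c - IZR m / alpha))))) <=
  sumR (- Z.of_nat M) (Z.of_nat M) (fun h => if Z.eqb h 0 then 0 else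
     Rmin (/ alpha) (/ IZR (Z.abs h)) * Cmod (lsumC l (fun m => Cmult (f m) (e (- IZR m * (IZR h / alpha)))))).
Proof.
  rewrite lsum_vaaler_poly_diff. eapply Rle_trans; [apply lsumC_norm|].
  rewrite sumR_lsumR. apply lsumR_le. intros h Hh%In_Zrange.
  rewrite !Cmod_mult. destruct (Z.eqb_spec h 0) as [->|Hh0].
  - rewrite vaaler_fourier_0, Cmod_0. lra.
  - apply Rmult_le_compat_r; [apply Cmod_ge_0|].
    rewrite Cmod_e_sub. apply vaaler_fourier_twist_bound; [auto | lia |].
    replace (IZR h * (c - / alpha) - IZR h * c) with (- (IZR h / alpha)) by (field; lra).
    rewrite Rabs_Ropp, abs_IZR. unfold Rdiv.
    rewrite Rabs_mult, (Rabs_pos_eq (/ alpha)); [reflexivity|].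
    apply Rlt_le, Rinv_0_lt_compat; lra.
Qed.

Lemma sawtooth_error_diff_sum_bound l c (f : Z -> C) (H : R) :
  (forall m, Cmod (f m) <= 1) -> 0 < H <= kernel_len M ->
  Cmod (lsumC l (fun m => Cmult (f m)
     (RtoC (sawtooth_error M (c - / alpha - IZR m / alpha) - sawtooth_error M (c - IZR m / alpha))))) <=
  / H * sumR (- Z.of_nat M) (Z.of_nat M) (fun h => Cmod (lsumC l (fun m => e (- IZR m * (IZR h / alpha))))).
Proof.
  intros Hf HH. eapply Rle_trans; [apply lsumC_norm|].
  apply Rle_trans with
    (lsumR l (fun m => vaaler_major M ((c - / alpha) - IZR m / alpha)) + lsumR l (fun m => vaaler_major M (c - IZR m / alpha))).
  - rewrite <- lsumR_plus. apply lsumR_le. intros m _.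
    rewrite Cmod_mult, Cmod_R.
    pose proof (vaaler_sawtooth_error M (c - / alpha - IZR m / alpha)).
    pose proof (vaaler_sawtooth_error M (c - IZR m / alpha)).
    pose proof (Hf m). pose proof (Cmod_ge_0 (f m)).
    assert (Rabs (sawtooth_error M (c - / alpha - IZR m / alpha) - sawtooth_error M (c - IZR m / alpha))
            <= vaaler_major M (c - / alpha - IZR m / alpha) + vaaler_major M (c - IZR m / alpha)).
    { eapply Rle_trans; [apply Rabs_triang|]. rewrite Rabs_Ropp. lra. }
    pose proof (Rabs_pos (sawtooth_error M (c - / alpha - IZR m / alpha) - sawtooth_error M (c - IZR m / alpha))).
    nra.
  - eapply Rle_trans; [apply Rplus_le_compat; apply lsum_vaaler_major_le|].
    rewrite <- lsumR_plus, sumR_lsumR, <- lsumR_scal. apply lsumR_le. intros h Hh%In_Zrange.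
    pose proof (kernel_len_pos M).
    assert (W : 2 * Cmod (major_fourier M h) <= / H).
    { apply Rle_trans with (/ kernel_len M); [|apply Rinv_le_contravar; lra].
      pose proof (Cmod_major_fourier_le M h ltac:(lia)).
      replace (/ kernel_len M) with (2 * / (2 * kernel_len M)) by (field; lra). lra. }
    pose proof (Cmod_ge_0 (lsumC l (fun m => e (- IZR m * (IZR h / alpha))))). nra.
Qed.

End ExponentialSums.

Lemma beatty_hits_sum_split M alpha beta l (f : Z -> C) : 1 <= alpha ->
  let c := beta / alpha in
  Cminus (lsumC l (fun m => Cmult (f m) (beatty_hits alpha beta m))) (Cmult (RtoC (/ alpha)) (lsumC l f)) =
  Cplus (lsumC l (fun m => Cmult (f m)
           (RtoC (vaaler_poly M (c - / alpha - IZR m / alpha) - vaaler_poly M (c - IZR m / alpha)))))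
        (lsumC l (fun m => Cmult (f m)
           (RtoC (sawtooth_error M (c - / alpha - IZR m / alpha) - sawtooth_error M (c - IZR m / alpha))))).
Proof.
  intros Ha c. rewrite <- lsumC_scal, <- lsumC_minus, <- lsumC_plus.
  apply lsumC_ext. intros m _. rewrite (beatty_hits_vaaler M) by auto. fold c.
  set (dv := vaaler_poly M _ - vaaler_poly M _). set (ds := sawtooth_error M _ - sawtooth_error M _).
  rewrite !RtoC_plus. ring.
Qed.

Theorem proposition5 :
  exists C0 : R,
  forall (phi : nat -> C), (forall m : nat, Cmod (phi m) <= 1) ->
  forall alpha beta K H : R,
    1 <= alpha -> 0 <= beta -> 0 <= K -> 1 <= H ->
    Cmod (Cminus
      (sumC 1 (floorZ K)
         (fun n => phi (Z.to_nat (floorZ (IZR n * alpha + beta)))))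
      (Cmult (RtoC (/ alpha))
         (sumC (floorZ beta + 1) (floorZ (beta + K * alpha))
            (fun m => phi (Z.to_nat m)))))
    <=
    sumR (- floorZ H) (floorZ H)
      (fun h => if Z.eqb h 0 then 0 else
         Rmin (/ alpha) (/ IZR (Z.abs h)) *
         Cmod (sumC (floorZ beta + 1) (floorZ (beta + K * alpha))
            (fun m => Cmult (phi (Z.to_nat m)) (e (- IZR m * (IZR h / alpha))))))
    + / H * sumR (- floorZ H) (floorZ H)
      (fun h =>
         Cmod (sumC (floorZ beta + 1) (floorZ (beta + K * alpha))
            (fun m => e (- IZR m * (IZR h / alpha)))))
    + C0.
Proof.
  exists 1. intros phi Hphi alpha beta K H Ha Hb HK HH.
  set (f := fun m : Z => phi (Z.to_nat m)).
  change (fun n => phi (Z.to_nat (floorZ (IZR n * alpha + beta))))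
    with (fun n => f (floorZ (IZR n * alpha + beta))).
  change (fun m => phi (Z.to_nat m)) with f.
  destruct (beatty_sum alpha beta f Ha K HK (fun m => Hphi _)) as [r [Hr ->]].
  set (M := Z.to_nat (floorZ H)).
  assert (EM : floorZ H = Z.of_nat M).
  { assert (1 <= floorZ H)%Z by (rewrite <- (floorZ_IZR 1); apply floorZ_le; lra).
    unfold M; lia. }
  assert (HLH : 0 < H <= kernel_len M).
  { unfold kernel_len. rewrite S_INR, INR_IZR_INZ, <- EM. pose proof (floorZ_spec H). lra. }
  rewrite EM, !sumC_lsumC.
  set (l := Zrange (floorZ beta + 1) (floorZ (beta + K * alpha))).
  replace (Cminus (Cplus (lsumC l (fun m => Cmult (f m) (beatty_hits alpha beta m))) r)
                  (Cmult (RtoC (/ alpha)) (lsumC l f)))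
    with (Cplus (Cminus (lsumC l (fun m => Cmult (f m) (beatty_hits alpha beta m)))
                        (Cmult (RtoC (/ alpha)) (lsumC l f))) r) by ring.
  rewrite (beatty_hits_sum_split M) by auto.
  set (T1 := lsumC l (fun m => Cmult (f m) (RtoC (vaaler_poly M _ - _)))).
  set (T2 := lsumC l (fun m => Cmult (f m) (RtoC (sawtooth_error M _ - _)))).
  apply Rle_trans with (Cmod T1 + Cmod T2 + 1).
  - pose proof (Cmod_triangle (Cplus T1 T2) r). pose proof (Cmod_triangle T1 T2). lra.
  - apply Rplus_le_compat_r, Rplus_le_compat.
    + exact (vaaler_poly_diff_sum_bound alpha Ha M l (beta / alpha) f).
    + exact (sawtooth_error_diff_sum_bound alpha Ha M l (beta / alpha) f H (fun m => Hphi _) HLH).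
Qed.
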